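(* Under any stationary policy $v$, the Markov chain $\{X_t\}$ has a single aperiodic communicating class $\widetilde S$ containing $\theta=[0,\dots,0]$ (possibly together with some transient states), and restricted to $\widetilde S$ the chain is geometrically ergodic. Moreover, letting $\pi$ denote its unique stationary distribution and $\tau_\theta := \min\{t\ge 0: X_t=\theta\}$: (1) there exists $a>0$ such that for every $x\ne\theta$, $\mathbb{E}[e^{a\tau_\theta}\mid X_0=x]\le K_x<\infty$ for some constant $K_x$, uniformly in $v$; (2) for every $f$ with $f = O(\Phi)$, $\mathbb{E}[f(X_t)]\to \sum_y \pi(y) f(y)$ exponentially fast, uniformly in $v$; in fact there are $K>0$ and $0<\eta<1$ with $\left|\mathbb{E}[f(X_t)\mid X_0=x] - \sum_y \pi(y)f(y)\right| \le K\left(1+\sum_i e^{a x_i}\right)\eta^t$ for $x=[x_1,\dots,x_I]$; (3) $\sup \mathbb{E}\left[\sum_i X^i_t\right]<\infty$, where the supremum is over all stationary policies and the expectation is with respect to the corresponding stationary distributions; in particular these stationary distributions form a compact (tight) set of probability measures; (4) $\sup \mathbb{E}\left[\sum_{t=0}^{\tau_\theta} \sum_i X^i_t\right] < \infty$, with the supremum as in (3).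
   Context: Processor sharing model: a single Bernoulli arrival process $\{\xi_t\}$ ($\xi_t\in\{0,1\}$ i.i.d., $P(\xi_t=1)=p\in(0,1)$). There are $I$ queues with lengths $X^i_t\in\mathcal N:=\{0,1,2,\dots\}$ evolving as $X^i_{t+1} = X^i_t - D^i_{t+1} + \nu^i_t \xi_{t+1}$, where $\nu^i_t\in\{0,1\}$, $\sum_i\nu^i_t=1$. Given $X^i_t = x\ge 1$, $D^i_{t+1}\sim \mathrm{Binomial}(x, q_i/x)$; if $x=0$ there are no departures. Standing assumption: $1>q_1>\dots>q_I>2p>0$. A stationary policy is a map $v:\mathcal N^I\to\{e_1,\dots,e_I\}$ (unit coordinate vectors) with $\nu_t = v(X_t)$; under it $\{X_t\}$ is a time-homogeneous Markov chain. $\Phi([x_1,\dots,x_I])=\sum_i e^{a x_i}$ where $a>0$ satisfies $p(e^a-1)<\frac{q_I}{2}(1-e^{-a})$. *)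

From Stdlib Require Import Reals List Arith ZArith.
Import ListNotations.
Open Scope R_scope.

(* A state [x_1,...,x_I] is a list of naturals of length I (index i is 0-based). *)
Definition state := list nat.
Definition valid (I : nat) (x : state) : Prop := length x = I.
Definition theta (I : nat) : state := repeat 0%nat I.

Fixpoint box (n k : nat) : list state :=
  match k with
  | O => [[]]
  | S k' => flat_map (fun l => map (fun j => j :: l) (seq 0 (S n))) (box n k')
  end.

Definition lsum (l : list state) (g : state -> R) : R :=
  fold_right (fun x acc => g x + acc) 0 l.

(* Partial sums of a series over N^I along the exhausting boxes [0,n]^I. *)
Definition boxsum (I : nat) (g : state -> R) (n : nat) : R := lsum (box n I) g.

Definition has_sum (I : nat) (g : state -> R) (s : R) : Prop :=
  (exists B, forall n, boxsum I (fun x => Rabs (g x)) n <= B) /\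
  Un_cv (boxsum I g) s.

(* P(D = k) for D ~ Binomial(n, r); for n = 0 this is the point mass at 0. *)
Definition dep_pmf (n : nat) (r : R) (k : Z) : R :=
  if (Z.leb 0 k && Z.leb k (Z.of_nat n))%bool
  then C n (Z.to_nat k) * r ^ (Z.to_nat k) * (1 - r) ^ (n - Z.to_nat k)
  else 0.

Definition arrival_pmf (p : R) (xi : nat) : R := if Nat.eqb xi 1 then p else 1 - p.

(* A stationary policy: state -> index of the queue receiving the arrival
   (index j encodes the unit vector e_{j+1}). *)
Definition policy (I : nat) (v : state -> nat) : Prop :=
  forall x, valid I x -> (v x < I)%nat.

(* One-step transition probability P(X_{t+1} = y | X_t = x) under policy v:
   X^i_{t+1} = X^i_t - D^i + nu^i xi, D^i ~ Bin(x_i, q_i/x_i) independent,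
   xi ~ Bernoulli(p) independent. *)
Definition trans (I : nat) (p : R) (q : nat -> R) (v : state -> nat)
  (x y : state) : R :=
  fold_right Rplus 0
    (map (fun xi =>
       arrival_pmf p xi *
       fold_right Rmult 1
         (map (fun i =>
            let xi_i := nth i x 0%nat in
            let e := if Nat.eqb i (v x) then xi else 0%nat in
            dep_pmf xi_i (q i / INR xi_i)
              (Z.of_nat xi_i + Z.of_nat e - Z.of_nat (nth i y 0%nat))%Z)
          (seq 0 I)))
     [0%nat; 1%nat]).

(* The support of trans x . is contained in box (list_max x + 1). *)
Definition Pf (I : nat) (p : R) (q : nat -> R) (v : state -> nat)
  (g : state -> R) (x : state) : R :=
  lsum (box (S (list_max x)) I) (fun z => trans I p q v x z * g z).

Fixpoint expect (I : nat) (p : R) (q : nat -> R) (v : state -> nat)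
  (t : nat) (g : state -> R) : state -> R :=
  match t with
  | O => g
  | S t' => Pf I p q v (expect I p q v t' g)
  end.

Definition indic (y : state) : state -> R :=
  fun z => if list_eq_dec Nat.eq_dec z y then 1 else 0.

Definition Pn I p q v (t : nat) (x y : state) : R := expect I p q v t (indic y) x.

Definition reach I p q v (x y : state) : Prop := exists t, Pn I p q v t x y > 0.

Definition in_class I p q v (x : state) : Prop :=
  reach I p q v (theta I) x /\ reach I p q v x (theta I).

(* theta is aperiodic: gcd{ n >= 1 : P^n(theta,theta) > 0 } = 1. *)
Definition aperiodic I p q v : Prop :=
  forall d : nat,
    (1 <= d)%nat ->
    (forall n : nat, (1 <= n)%nat -> Pn I p q v n (theta I) (theta I) > 0 ->
        Nat.divide d n) ->
    d = 1%nat.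

Definition stationary I p q v (pi : state -> R) : Prop :=
  (forall x, valid I x -> 0 <= pi x) /\
  has_sum I pi 1 /\
  (forall y, valid I y -> has_sum I (fun x => pi x * trans I p q v x y) (pi y)).

(* hit_prob t x = P(tau_theta = t | X_0 = x), tau_theta = min{t >= 0 : X_t = theta}. *)
Fixpoint hit_prob I p q v (t : nat) (x : state) : R :=
  match t with
  | O => if list_eq_dec Nat.eq_dec x (theta I) then 1 else 0
  | S t' => if list_eq_dec Nat.eq_dec x (theta I) then 0
            else Pf I p q v (hit_prob I p q v t') x
  end.

(* taboo_sum g n x = E[ sum_{t=0}^{min(tau_theta, n)} g(X_t) | X_0 = x ]. *)
Fixpoint taboo_sum I p q v (g : state -> R) (n : nat) (x : state) : R :=
  match n with
  | O => g x
  | S n' => g x + (if list_eq_dec Nat.eq_dec x (theta I) then 0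
                   else Pf I p q v (taboo_sum I p q v g n') x)
  end.

Definition total (I : nat) (x : state) : R :=
  fold_right Rplus 0 (map (fun i => INR (nth i x 0%nat)) (seq 0 I)).

Definition Phi (I : nat) (a : R) (x : state) : R :=
  fold_right Rplus 0 (map (fun i => exp (a * INR (nth i x 0%nat))) (seq 0 I)).

From Stdlib Require Import Reals List Arith ZArith Lra Lia.
Import ListNotations.
Open Scope R_scope.

(* Harris' theorem in the form of Hairer and Mattingly, with every constant independent
   of the policy. Every queue drains at rate at least [q_I/2 > p], so [Φ x = Σ_i e^{a x_i}]
   satisfies the drift inequality [P Φ <= γ Φ + b] with [γ < 1]; from the sublevel set
   [{Φ <= R}] the chain empties all queues at once with probability at least [α > 0].
   Together these make [P] a strict contraction, at rate [ρ < 1], for the seminorm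
   [|f x - f y| <= L (2 + β Φ x + β Φ y)]. Hence [P^t(θ, .)] is Cauchy, its limit is the
   unique stationary law, [π Φ <= b / (1 - γ)] for every stationary [π], and [E_x f(X_t)]
   converges to [π f] at rate [ρ^t] whenever [|f| <= c Φ]. The same two inequalities show
   that [U = Φ + 2 b / α] off [θ], [U θ = 0], satisfies [P U <= ρ U] off [θ]: this gives a
   geometric tail for [τ_θ] and bounds the expected queue content up to [τ_θ] by a
   multiple of [U], whose [π]-average is bounded by the drift. *)

Definition rsum {A} (l : list A) (f : A -> R) : R :=
  fold_right (fun x acc => f x + acc) 0 l.

Definition rprod {A} (l : list A) (f : A -> R) : R := fold_right Rmult 1 (map f l).

Section ListSums.
Context {A B : Type}.
Implicit Types (l : list A) (f g : A -> R).

Lemma rsum_nil f : rsum [] f = 0.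
Proof. reflexivity. Qed.

Lemma rsum_cons x l f : rsum (x :: l) f = f x + rsum l f.
Proof. reflexivity. Qed.

Lemma fold_Rplus_map l f : fold_right Rplus 0 (map f l) = rsum l f.
Proof. induction l as [|x l IH]; simpl; [|rewrite IH]; reflexivity. Qed.

Lemma rsum_app l1 l2 f : rsum (l1 ++ l2) f = rsum l1 f + rsum l2 f.
Proof. induction l1 as [|x l IH]; simpl; [lra|]. unfold rsum in *; simpl; rewrite IH; lra. Qed.

Lemma rsum_map (h : B -> A) (l : list B) f : rsum (map h l) f = rsum l (fun x => f (h x)).
Proof. induction l as [|x l IH]; simpl; [|unfold rsum in *; simpl; rewrite IH]; reflexivity. Qed.

Lemma rsum_flat_map (h : B -> list A) (l : list B) f :
  rsum (flat_map h l) f = rsum l (fun x => rsum (h x) f).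
Proof. induction l as [|x l IH]; simpl; [|rewrite rsum_app, IH]; reflexivity. Qed.

Lemma rsum_ext_in l f g : (forall x, In x l -> f x = g x) -> rsum l f = rsum l g.
Proof.
  induction l as [|x l IH]; intros H; [reflexivity|]. rewrite !rsum_cons.
  rewrite H, IH; [reflexivity | intros; apply H | ]; simpl; auto.
Qed.

Lemma rsum_plus l f g : rsum l (fun x => f x + g x) = rsum l f + rsum l g.
Proof. induction l as [|x l IH]; simpl; [lra|]. unfold rsum in *; simpl; rewrite IH; lra. Qed.

Lemma rsum_minus l f g : rsum l (fun x => f x - g x) = rsum l f - rsum l g.
Proof. induction l as [|x l IH]; simpl; [lra|]. unfold rsum in *; simpl; rewrite IH; lra. Qed.

Lemma rsum_scal l c f : rsum l (fun x => c * f x) = c * rsum l f.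
Proof. induction l as [|x l IH]; simpl; [lra|]. unfold rsum in *; simpl; rewrite IH; lra. Qed.

Lemma rsum_const l c : rsum l (fun _ => c) = INR (length l) * c.
Proof.
  induction l as [|x l IH]; simpl length; [simpl; lra|].
  rewrite rsum_cons, IH, S_INR; lra.
Qed.

Lemma rsum_zero l : rsum l (fun _ => 0) = 0.
Proof. rewrite rsum_const; lra. Qed.

Lemma rsum_le l f g : (forall x, In x l -> f x <= g x) -> rsum l f <= rsum l g.
Proof.
  induction l as [|x l IH]; intros H; simpl; [lra|].
  assert (f x <= g x) by (apply H; simpl; auto).
  assert (rsum l f <= rsum l g) by (apply IH; intros; apply H; simpl; auto).
  unfold rsum in *; simpl; lra.
Qed.

Lemma rsum_nonneg l f : (forall x, In x l -> 0 <= f x) -> 0 <= rsum l f.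
Proof. intros H. rewrite <- (rsum_zero l). apply rsum_le; auto. Qed.

Lemma rsum_abs l f : Rabs (rsum l f) <= rsum l (fun x => Rabs (f x)).
Proof.
  induction l as [|x l IH]; simpl; [rewrite Rabs_R0; lra|].
  eapply Rle_trans; [apply Rabs_triang|]. unfold rsum in *; simpl; lra.
Qed.

Lemma term_le_rsum l f x : (forall y, In y l -> 0 <= f y) -> In x l -> f x <= rsum l f.
Proof.
  induction l as [|y l IH]; intros H Hx; [destruct Hx|].
  rewrite rsum_cons. destruct Hx as [<-|Hin].
  - assert (0 <= rsum l f) by (apply rsum_nonneg; intros; apply H; simpl; auto). lra.
  - assert (0 <= f y) by (apply H; simpl; auto).
    assert (f x <= rsum l f) by (apply IH; auto; intros; apply H; simpl; auto). lra.
Qed.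

Lemma rprod_cons x l f : rprod (x :: l) f = f x * rprod l f.
Proof. reflexivity. Qed.

Lemma rprod_app l1 l2 f : rprod (l1 ++ l2) f = rprod l1 f * rprod l2 f.
Proof. induction l1 as [|x l IH]; unfold rprod in *; simpl; [lra|]. rewrite IH. lra. Qed.

Lemma rprod_ext_in l f g : (forall x, In x l -> f x = g x) -> rprod l f = rprod l g.
Proof.
  induction l as [|x l IH]; intros H; [reflexivity|]. rewrite !rprod_cons.
  rewrite H, IH; [reflexivity | intros; apply H | ]; simpl; auto.
Qed.

Lemma rprod_mult l f g : rprod l (fun x => f x * g x) = rprod l f * rprod l g.
Proof. induction l as [|x l IH]; [unfold rprod; simpl; lra|]. rewrite !rprod_cons, IH. ring. Qed.

Lemma rprod_one l : rprod l (fun _ => 1) = 1.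
Proof. induction l as [|x l IH]; [reflexivity|]. rewrite rprod_cons, IH; lra. Qed.

Lemma rprod_zero l f x : In x l -> f x = 0 -> rprod l f = 0.
Proof.
  induction l as [|y l IH]; intros Hx H; [destruct Hx|].
  rewrite rprod_cons. destruct Hx as [<-|Hin].
  - rewrite H; lra.
  - rewrite (IH Hin H); lra.
Qed.

Lemma rprod_nonneg l f : (forall x, In x l -> 0 <= f x) -> 0 <= rprod l f.
Proof.
  induction l as [|x l IH]; intros H; [unfold rprod; simpl; lra|]. rewrite rprod_cons.
  apply Rmult_le_pos; [apply H | apply IH; intros; apply H]; simpl; auto.
Qed.

Lemma rprod_pos l f : (forall x, In x l -> 0 < f x) -> 0 < rprod l f.
Proof.
  induction l as [|x l IH]; intros H; [unfold rprod; simpl; lra|]. rewrite rprod_cons.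
  apply Rmult_lt_0_compat; [apply H | apply IH; intros; apply H]; simpl; auto.
Qed.

Lemma pow_le_rprod l f c :
  0 <= c -> (forall x, In x l -> c <= f x) -> c ^ length l <= rprod l f.
Proof.
  induction l as [|x l IH]; intros Hc H; unfold rprod in *; simpl; [lra|].
  apply Rmult_le_compat; auto.
  - apply pow_le; auto.
  - apply H; simpl; auto.
  - apply IH; auto; intros; apply H; simpl; auto.
Qed.

End ListSums.

Lemma rsum_swap {A B} (l1 : list A) (l2 : list B) F :
  rsum l1 (fun x => rsum l2 (F x)) = rsum l2 (fun y => rsum l1 (fun x => F x y)).
Proof.
  induction l1 as [|x l IH].
  - rewrite rsum_nil. symmetry. apply rsum_zero.
  - rewrite rsum_cons, IH, <- rsum_plus. reflexivity.
Qed.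

Lemma rprod_seq_delta k i0 c : (i0 < k)%nat ->
  rprod (seq 0 k) (fun i => if Nat.eqb i i0 then c else 1) = c.
Proof.
  induction k as [|k IH]; intros Hk; [lia|]. rewrite seq_S, rprod_app.
  unfold rprod at 2; simpl. destruct (Nat.eq_dec i0 k) as [->|Hne].
  - rewrite Nat.eqb_refl, (rprod_ext_in _ _ (fun _ => 1)), rprod_one; [ring|].
    intros i Hi. apply in_seq in Hi. rewrite (proj2 (Nat.eqb_neq i k)) by lia. reflexivity.
  - rewrite IH, (proj2 (Nat.eqb_neq k i0)) by lia. ring.
Qed.

Lemma rsum_seq_S n f : rsum (seq 0 (S n)) f = rsum (seq 0 n) f + f n.
Proof. rewrite seq_S, rsum_app, rsum_cons, rsum_nil. simpl. lra. Qed.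

Lemma rsum_seq_sum_f_R0 n f : rsum (seq 0 (S n)) f = sum_f_R0 f n.
Proof. induction n as [|n IH]; [simpl; lra|]. rewrite rsum_seq_S, IH. reflexivity. Qed.

Lemma rsum_seq_trunc N M h : (N <= M)%nat -> (forall j, (N < j)%nat -> h j = 0) ->
  rsum (seq 0 (S M)) h = rsum (seq 0 (S N)) h.
Proof.
  intros HNM H. replace M with (N + (M - N))%nat by lia.
  induction (M - N)%nat as [|d IH].
  - rewrite Nat.add_0_r; reflexivity.
  - rewrite Nat.add_succ_r, rsum_seq_S, IH, H by lia. lra.
Qed.

Lemma rsum_seq_delta N j0 G :
  rsum (seq 0 (S N)) (fun j => G j * (if Nat.eq_dec j0 j then 1 else 0))
  = if Nat.leb j0 N then G j0 else 0.
Proof.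
  induction N as [|N IH].
  - simpl. destruct (Nat.eq_dec j0 0) as [->|Hne]; simpl; [lra|].
    destruct j0; [lia|simpl; lra].
  - rewrite rsum_seq_S, IH. destruct (Nat.eq_dec j0 (S N)) as [->|Hne].
    + rewrite (proj2 (Nat.leb_gt (S N) N)), Nat.leb_refl by lia. lra.
    + destruct (Nat.leb j0 N) eqn:E1; destruct (Nat.leb j0 (S N)) eqn:E2;
        apply Nat.leb_le in E1 || apply Nat.leb_gt in E1;
        apply Nat.leb_le in E2 || apply Nat.leb_gt in E2; try lia; lra.
Qed.

Lemma rsum_seq_rev N F : rsum (seq 0 (S N)) (fun j => F (N - j)%nat) = rsum (seq 0 (S N)) F.
Proof.
  induction N as [|N IH]; [reflexivity|].
  rewrite (rsum_seq_S (S N) F), <- (cons_seq (S N) 0), rsum_cons, <- seq_shift, rsum_map.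
  replace (S N - 0)%nat with (S N) by lia. simpl (S N - S _)%nat. rewrite IH. lra.
Qed.

Definition in_box (N : nat) (z : state) : bool := forallb (fun j => Nat.leb j N) z.

Lemma in_box_cons N j l : in_box N (j :: l) = (Nat.leb j N && in_box N l)%bool.
Proof. reflexivity. Qed.

Lemma in_box_mono N M z : (N <= M)%nat -> in_box N z = true -> in_box M z = true.
Proof.
  unfold in_box. rewrite !forallb_forall. intros H1 H2 j Hj.
  apply H2, Nat.leb_le in Hj. apply Nat.leb_le. lia.
Qed.

Lemma in_box_false N z :
  in_box N z = false -> exists i, (i < length z)%nat /\ (N < nth i z 0%nat)%nat.
Proof.
  induction z as [|j l IH]; [discriminate|]. rewrite in_box_cons. intros H.
  destruct (Nat.leb j N) eqn:E.
  - destruct (IH H) as [i [Hi1 Hi2]]. exists (S i). simpl; split; [lia|auto].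
  - exists 0%nat. apply Nat.leb_gt in E. simpl; split; [lia|auto].
Qed.

Lemma in_box_nth N z i : in_box N z = true -> (nth i z 0 <= N)%nat.
Proof.
  intros H. destruct (Nat.lt_ge_cases i (length z)).
  - unfold in_box in H. rewrite forallb_forall in H. apply Nat.leb_le, H, nth_In; auto.
  - rewrite nth_overflow by auto. lia.
Qed.

Lemma in_box_list_max z : in_box (list_max z) z = true.
Proof.
  apply forallb_forall. intros j Hj. apply Nat.leb_le.
  assert (Hf := proj1 (list_max_le z (list_max z)) (Nat.le_refl _)).
  rewrite Forall_forall in Hf. auto.
Qed.

Lemma list_max_le_in_box N z : in_box N z = true -> (list_max z <= N)%nat.
Proof.
  intros H. apply list_max_le, Forall_forall. intros j Hj.
  unfold in_box in H. rewrite forallb_forall in H. apply Nat.leb_le; auto.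
Qed.

Lemma nth_le_list_max z i : (nth i z 0 <= list_max z)%nat.
Proof. apply in_box_nth, in_box_list_max. Qed.

Lemma In_box n k z : In z (box n k) <-> length z = k /\ in_box n z = true.
Proof.
  revert z; induction k as [|k IH]; intros z; cbn [box].
  - split.
    + intros [<-|[]]; auto.
    + intros [H _]. destruct z; simpl in H; [left; auto | lia].
  - rewrite in_flat_map. split.
    + intros [l [Hl Hz]]. apply in_map_iff in Hz. destruct Hz as [j [<- Hj]].
      apply IH in Hl. apply in_seq in Hj. split; [simpl; lia|]. rewrite in_box_cons.
      apply andb_true_intro; split; [apply Nat.leb_le; lia | tauto].
    + intros [Hlen Hb]. destruct z as [|j l]; simpl in Hlen; [lia|].
      rewrite in_box_cons in Hb. apply andb_prop in Hb. destruct Hb as [H1 H2].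
      exists l. split; [apply IH; split; auto; lia|].
      apply in_map_iff. exists j; split; auto. apply in_seq. apply Nat.leb_le in H1; lia.
Qed.

Lemma rsum_box_S n k g :
  rsum (box n (S k)) g = rsum (box n k) (fun l => rsum (seq 0 (S n)) (fun j => g (j :: l))).
Proof.
  cbn [box]. rewrite rsum_flat_map. apply rsum_ext_in. intros. rewrite rsum_map. reflexivity.
Qed.

Lemma rsum_box_trunc k : forall g N M, (N <= M)%nat ->
  (forall z, length z = k -> in_box N z = false -> g z = 0) ->
  rsum (box M k) g = rsum (box N k) g.
Proof.
  induction k as [|k IH]; intros g N M HNM H; [reflexivity|]. rewrite !rsum_box_S.
  transitivity (rsum (box M k) (fun l => rsum (seq 0 (S N)) (fun j => g (j :: l)))).
  - apply rsum_ext_in. intros l Hl. apply rsum_seq_trunc; auto. intros j Hj.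
    apply In_box in Hl. apply H; [simpl; lia|].
    rewrite in_box_cons, (proj2 (Nat.leb_gt j N) Hj). reflexivity.
  - apply IH; auto. intros z Hz Hb. rewrite <- (rsum_zero (seq 0 (S N))).
    apply rsum_ext_in. intros j _. apply H; [simpl; lia|].
    rewrite in_box_cons, Hb. apply Bool.andb_false_r.
Qed.

Lemma rsum_box_rprod m k : forall H : nat -> nat -> R,
  rsum (box m k) (fun y => rprod (seq 0 k) (fun i => H i (nth i y 0%nat))) =
  rprod (seq 0 k) (fun i => rsum (seq 0 (S m)) (H i)).
Proof.
  assert (Hshift : forall (F : nat -> R) k, rprod (seq 0 (S k)) F
                     = F 0%nat * rprod (seq 0 k) (fun i => F (S i))).
  { intros F k'. rewrite <- cons_seq, rprod_cons, <- seq_shift.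
    unfold rprod. rewrite map_map. reflexivity. }
  induction k as [|k IH]; intros H; [unfold rsum, rprod; simpl; lra|].
  rewrite rsum_box_S, Hshift, <- (IH (fun i => H (S i))), <- rsum_scal.
  apply rsum_ext_in. intros l _. rewrite Rmult_comm, <- rsum_scal.
  apply rsum_ext_in. intros j _. rewrite Hshift. simpl. ring.
Qed.

Lemma indic_sym y z : indic y z = indic z y.
Proof.
  unfold indic. destruct (list_eq_dec Nat.eq_dec z y); destruct (list_eq_dec Nat.eq_dec y z);
    subst; congruence.
Qed.

Lemma indic_range y z : 0 <= indic y z <= 1.
Proof. unfold indic; destruct (list_eq_dec Nat.eq_dec z y); lra. Qed.

Lemma indic_cons j l j0 l0 :
  indic (j :: l) (j0 :: l0) = (if Nat.eq_dec j0 j then 1 else 0) * indic l l0.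
Proof.
  unfold indic. destruct (list_eq_dec Nat.eq_dec (j0 :: l0) (j :: l)) as [E|E].
  - injection E as -> ->. destruct (Nat.eq_dec j j); [|congruence].
    destruct (list_eq_dec Nat.eq_dec l l); [lra|congruence].
  - destruct (Nat.eq_dec j0 j) as [->|]; [|lra].
    destruct (list_eq_dec Nat.eq_dec l0 l) as [->|]; [congruence|lra].
Qed.

Lemma rsum_box_indic N k : forall F z, length z = k ->
  rsum (box N k) (fun y => F y * indic y z) = if in_box N z then F z else 0.
Proof.
  induction k as [|k IH]; intros F z Hz.
  - destruct z; simpl in Hz; [|lia]. unfold indic; simpl.
    destruct (list_eq_dec Nat.eq_dec [] []); [lra|congruence].
  - destruct z as [|j0 l0]; simpl in Hz; [lia|]. rewrite rsum_box_S.
    transitivity (rsum (box N k)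
      (fun l => (if Nat.leb j0 N then F (j0 :: l) else 0) * indic l l0)).
    + apply rsum_ext_in. intros l _.
      rewrite (rsum_ext_in _ _ (fun j => F (j :: l) * indic l l0 *
                                          (if Nat.eq_dec j0 j then 1 else 0)))
        by (intros; rewrite indic_cons; ring).
      rewrite rsum_seq_delta. destruct (Nat.leb j0 N); ring.
    + rewrite IH, in_box_cons by lia.
      destruct (Nat.leb j0 N), (in_box N l0); reflexivity.
Qed.

Lemma theta_valid I : valid I (theta I).
Proof. apply repeat_length. Qed.

Lemma nth_theta I i : nth i (theta I) 0%nat = 0%nat.
Proof. apply nth_repeat. Qed.

Lemma in_box_theta N I : in_box N (theta I) = true.
Proof. apply forallb_forall. intros j Hj. apply repeat_spec in Hj. subst. reflexivity. Qed.

Lemma theta_In_box N I : In (theta I) (box N I).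
Proof. apply In_box. split; [apply theta_valid | apply in_box_theta]. Qed.

(** * Binomial moments *)

Lemma exp_le x y : x <= y -> exp x <= exp y.
Proof. intros [H|H]; [apply Rlt_le, exp_increasing; auto | subst; lra]. Qed.

Lemma exp_pow_INR x k : exp x ^ k = exp (INR k * x).
Proof.
  induction k as [|k IH]; [simpl; rewrite Rmult_0_l, exp_0; reflexivity|].
  rewrite S_INR, <- tech_pow_Rmult, IH, <- exp_plus. f_equal. ring.
Qed.

Lemma pow_le_pow_le1 r n m : 0 <= r <= 1 -> (n <= m)%nat -> r ^ m <= r ^ n.
Proof.
  intros Hr Hnm. replace m with (n + (m - n))%nat by lia. rewrite pow_add.
  assert (r ^ (m - n) <= 1)
    by (apply Rle_trans with (1 ^ (m - n)); [apply pow_incr; lra | rewrite pow1; lra]).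
  assert (0 <= r ^ n) by (apply pow_le; lra). nra.
Qed.

Lemma C_nonneg n k : 0 <= C n k.
Proof.
  unfold C. apply Rle_mult_inv_pos; [apply pos_INR|].
  apply Rmult_lt_0_compat; apply INR_fact_lt_0.
Qed.

Lemma dep_pmf_neg n r k : (k < 0)%Z -> dep_pmf n r k = 0.
Proof. intros H. unfold dep_pmf. rewrite (proj2 (Z.leb_gt 0 k) H). reflexivity. Qed.

Lemma dep_pmf_of_nat n r k : dep_pmf n r (Z.of_nat k) =
  if Nat.leb k n then C n k * r ^ k * (1 - r) ^ (n - k) else 0.
Proof.
  unfold dep_pmf. rewrite Nat2Z.id. destruct (Nat.leb k n) eqn:E.
  - apply Nat.leb_le in E.
    rewrite (proj2 (Z.leb_le 0 (Z.of_nat k))), (proj2 (Z.leb_le (Z.of_nat k) (Z.of_nat n)))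
      by lia. reflexivity.
  - apply Nat.leb_gt in E.
    rewrite (proj2 (Z.leb_gt (Z.of_nat k) (Z.of_nat n))), Bool.andb_false_r by lia. reflexivity.
Qed.

(* For [n = 0] the "probability" [r] is [q/0 = 0] in Rocq, so it need not lie in [0,1]. *)
Lemma dep_pmf_nonneg n r k : n = 0%nat \/ 0 <= r <= 1 -> 0 <= dep_pmf n r k.
Proof.
  intros H. unfold dep_pmf.
  destruct ((0 <=? k)%Z && (k <=? Z.of_nat n)%Z)%bool eqn:E; [|lra].
  apply andb_prop in E. destruct E as [E1 E2]. apply Z.leb_le in E1. apply Z.leb_le in E2.
  destruct H as [->|H].
  - replace k with 0%Z by lia. unfold C. simpl. lra.
  - apply Rmult_le_pos; [apply Rmult_le_pos; [apply C_nonneg|]|]; apply pow_le; lra.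
Qed.

(** Summing [h] against the law of [n + e - D], [D ~ Bin(n, r)]. *)
Lemma rsum_dep_pmf_shift n e r M h : (n + e <= M)%nat ->
  rsum (seq 0 (S M)) (fun j => dep_pmf n r (Z.of_nat n + Z.of_nat e - Z.of_nat j) * h j) =
  sum_f_R0 (fun k => C n k * r ^ k * (1 - r) ^ (n - k) * h (n + e - k)%nat) n.
Proof.
  intros HM.
  rewrite (rsum_seq_trunc (n + e) M) by (auto; intros j Hj; rewrite dep_pmf_neg by lia; lra).
  set (F := fun k => dep_pmf n r (Z.of_nat k) * h (n + e - k)%nat).
  transitivity (rsum (seq 0 (S (n + e))) (fun j => F (n + e - j)%nat)).
  - apply rsum_ext_in. intros j Hj. apply in_seq in Hj. unfold F.
    replace (Z.of_nat n + Z.of_nat e - Z.of_nat j)%Z with (Z.of_nat (n + e - j)) by lia.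
    do 2 f_equal. lia.
  - rewrite rsum_seq_rev, (rsum_seq_trunc n (n + e)), rsum_seq_sum_f_R0 by
      (try lia; intros j Hj; unfold F; rewrite dep_pmf_of_nat, (proj2 (Nat.leb_gt j n) Hj); lra).
    apply sum_eq. intros k Hk. unfold F. rewrite dep_pmf_of_nat, (proj2 (Nat.leb_le k n) Hk).
    reflexivity.
Qed.

Lemma binomial_pmf_sum n r : sum_f_R0 (fun k => C n k * r ^ k * (1 - r) ^ (n - k) * 1) n = 1.
Proof.
  transitivity ((r + (1 - r)) ^ n).
  - rewrite binomial. apply sum_eq. intros; ring.
  - replace (r + (1 - r)) with 1 by ring. apply pow1.
Qed.

Lemma binomial_exp_moment n e r a :
  sum_f_R0 (fun k => C n k * r ^ k * (1 - r) ^ (n - k) * exp (a * INR (n + e - k))) n =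
  exp (a * INR (n + e)) * (r * exp (- a) + (1 - r)) ^ n.
Proof.
  rewrite binomial, scal_sum. apply sum_eq. intros k Hk.
  replace (exp (a * INR (n + e - k))) with (exp (a * INR (n + e)) * exp (- a) ^ k).
  - rewrite Rpow_mult_distr. ring.
  - rewrite exp_pow_INR, <- exp_plus. f_equal. rewrite minus_INR by lia. ring.
Qed.

Lemma pow_one_minus_div_le s n : 0 <= s <= 1 -> (1 <= n)%nat -> (1 - s / INR n) ^ n <= 1 - s / 2.
Proof.
  intros Hs Hn. assert (Hn' : 1 <= INR n) by (apply (le_INR 1); auto).
  set (t := s / INR n).
  assert (Ht : 0 <= t <= 1).
  { unfold t. split; [apply Rmult_le_pos; [lra | apply Rlt_le, Rinv_0_lt_compat; lra]|].
    apply Rle_trans with (s / 1); [|lra]. apply Rmult_le_compat_l; [lra|].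
    apply Rinv_le_contravar; lra. }
  assert (Hs' : s = INR n * t) by (unfold t; field; lra).
  (* Bernoulli's inequality [1 + s <= (1 + t)^n] against [(1 - t)^n (1 + t)^n <= 1]. *)
  assert (H1 : (1 - t) ^ n * (1 + t) ^ n <= 1).
  { rewrite <- Rpow_mult_distr. apply Rle_trans with (1 ^ n); [apply pow_incr; nra | rewrite pow1; lra]. }
  assert (H2 : 1 + s <= (1 + t) ^ n).
  { destruct (Req_dec t 0) as [E|E].
    - rewrite Hs', E, Rmult_0_r, !Rplus_0_r, pow1. lra.
    - rewrite Hs'. apply poly. lra. }
  assert (H3 : 0 <= (1 - t) ^ n) by (apply pow_le; lra).
  assert ((1 - t) ^ n * (1 + s) <= 1)
    by (eapply Rle_trans; [|apply H1]; apply Rmult_le_compat_l; auto).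
  nra.
Qed.

Lemma Rabs_le_between x b : Rabs x <= b -> - b <= x <= b.
Proof. unfold Rabs; destruct (Rcase_abs x); intros; lra. Qed.

Lemma Rabs_sub_le x y : Rabs (x - y) <= Rabs x + Rabs y.
Proof. unfold Rminus. rewrite <- (Rabs_Ropp y). apply Rabs_triang. Qed.

Lemma cv_const c : Un_cv (fun _ => c) c.
Proof. intros e He. exists 0%nat. intros. unfold Rdist. rewrite Rminus_diag, Rabs_R0. lra. Qed.

Lemma cv_eventually_ext u w l N0 :
  (forall n, (n >= N0)%nat -> u n = w n) -> Un_cv u l -> Un_cv w l.
Proof.
  intros H Hu e He. destruct (Hu e He) as [N HN]. exists (max N N0). intros n Hn.
  rewrite <- H by lia. apply HN; lia.
Qed.

Lemma cv_eventually_const u l N0 : (forall n, (n >= N0)%nat -> u n = l) -> Un_cv u l.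
Proof. intros H. apply (cv_eventually_ext (fun _ => l) u l N0); [intros; symmetry; auto | apply cv_const]. Qed.

Lemma cv_shift1 u l : Un_cv u l -> Un_cv (fun n => u (S n)) l.
Proof.
  intros Hu. apply (cv_eventually_ext (fun n => u (n + 1)%nat) _ _ 0); [|apply CV_shift'; auto].
  intros n _. f_equal. lia.
Qed.

Lemma cv_scal c u l : Un_cv u l -> Un_cv (fun n => c * u n) (c * l).
Proof. apply CV_mult, cv_const. Qed.

Lemma cv_le_eventually u l B N0 : Un_cv u l -> (forall n, (n >= N0)%nat -> u n <= B) -> l <= B.
Proof.
  intros Hu H. destruct (Rle_or_lt l B) as [|Hlt]; auto.
  destruct (Hu (l - B) ltac:(lra)) as [N HN]. specialize (HN (max N N0) ltac:(lia)).
  specialize (H (max N N0) ltac:(lia)). apply Rabs_def2 in HN. lra.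
Qed.

Lemma cv_ge_eventually u l B N0 : Un_cv u l -> (forall n, (n >= N0)%nat -> B <= u n) -> B <= l.
Proof.
  intros Hu H. assert (- l <= - B); [|lra].
  apply (cv_le_eventually (fun n => - u n) _ _ N0); [|intros n Hn; specialize (H n Hn); lra].
  replace (- l) with (-1 * l) by ring.
  apply (cv_eventually_ext (fun n => -1 * u n) _ _ 0); [|apply cv_scal; auto].
  intros; ring.
Qed.

Lemma cv_abs_le_eventually u l B N0 :
  Un_cv u l -> (forall n, (n >= N0)%nat -> Rabs (u n) <= B) -> Rabs l <= B.
Proof. intros Hu H. apply (cv_le_eventually (fun n => Rabs (u n)) _ B N0); auto. apply cv_cvabs; auto. Qed.

Lemma cv_squeeze u w e l :
  Un_cv w l -> Un_cv e 0 -> (forall n, Rabs (u n - w n) <= e n) -> Un_cv u l.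
Proof.
  intros Hw He H eps Heps. destruct (Hw (eps / 2) ltac:(lra)) as [N1 H1].
  destruct (He (eps / 2) ltac:(lra)) as [N2 H2]. exists (max N1 N2). intros n Hn.
  specialize (H1 n ltac:(lia)). specialize (H2 n ltac:(lia)). specialize (H n).
  unfold Rdist in *. rewrite Rminus_0_r in H2.
  apply Rabs_le_between in H. apply Rabs_def2 in H1. apply Rabs_def2 in H2. apply Rabs_def1; lra.
Qed.

Lemma cv_rsum {A} (l : list A) F G : (forall y, In y l -> Un_cv (fun t => F t y) (G y)) ->
  Un_cv (fun t => rsum l (F t)) (rsum l G).
Proof.
  induction l as [|x l IH]; intros H; [exact (cv_const 0)|].
  apply CV_plus; [apply H | apply IH; intros; apply H]; simpl; auto.
Qed.

Lemma cv_geom r c : 0 <= r < 1 -> Un_cv (fun n => r ^ n * c) 0.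
Proof.
  intros Hr. rewrite <- (Rmult_0_l c). apply (CV_mult (fun n => r ^ n) (fun _ => c)); [|apply cv_const].
  intros e He. destruct (pow_lt_1_zero r ltac:(rewrite Rabs_right; lra) e He) as [N HN].
  exists N. intros n Hn. unfold Rdist. rewrite Rminus_0_r. auto.
Qed.

Lemma geom_small r c e : 0 <= r < 1 -> 0 < e -> exists n, r ^ n * c < e.
Proof.
  intros Hr He. destruct (cv_geom r c Hr e He) as [N HN]. exists N.
  specialize (HN N (le_n _)). unfold Rdist in HN. rewrite Rminus_0_r in HN.
  apply Rabs_def2 in HN. lra.
Qed.

Section BoxSums.
Variable I : nat.
Implicit Types (g h w : state -> R).

Lemma boxsum_rsum g N : boxsum I g N = rsum (box N I) g.
Proof. reflexivity. Qed.

Lemma boxsum_ext g h N : (forall z, valid I z -> g z = h z) -> boxsum I g N = boxsum I h N.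
Proof. intros H. apply rsum_ext_in. intros z Hz. apply In_box in Hz. apply H, Hz. Qed.

Lemma boxsum_le g h N : (forall z, valid I z -> g z <= h z) -> boxsum I g N <= boxsum I h N.
Proof. intros H. apply rsum_le. intros z Hz. apply In_box in Hz. apply H, Hz. Qed.

Lemma boxsum_nonneg g N : (forall z, valid I z -> 0 <= g z) -> 0 <= boxsum I g N.
Proof. intros H. apply rsum_nonneg. intros z Hz. apply In_box in Hz. apply H, Hz. Qed.

Lemma boxsum_abs g N : Rabs (boxsum I g N) <= boxsum I (fun z => Rabs (g z)) N.
Proof. apply rsum_abs. Qed.

Lemma boxsum_plus g h N : boxsum I (fun z => g z + h z) N = boxsum I g N + boxsum I h N.
Proof. apply rsum_plus. Qed.

Lemma boxsum_minus g h N : boxsum I (fun z => g z - h z) N = boxsum I g N - boxsum I h N.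
Proof. apply rsum_minus. Qed.

Lemma boxsum_scal c g N : boxsum I (fun z => c * g z) N = c * boxsum I g N.
Proof. apply rsum_scal. Qed.

Lemma boxsum_trunc g N M : (N <= M)%nat ->
  boxsum I (fun z => if in_box N z then g z else 0) M = boxsum I g N.
Proof.
  intros HNM. unfold boxsum, lsum. fold (rsum (box M I) (fun z => if in_box N z then g z else 0)).
  rewrite (rsum_box_trunc I _ N M HNM) by (intros z _ ->; reflexivity).
  apply rsum_ext_in. intros z Hz. apply In_box in Hz. destruct Hz as [_ ->]. reflexivity.
Qed.

Lemma boxsum_split g N M : (N <= M)%nat ->
  boxsum I g M = boxsum I g N + boxsum I (fun z => if in_box N z then 0 else g z) M.
Proof.
  intros HNM. rewrite <- (boxsum_trunc g N M HNM), <- boxsum_plus.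
  apply boxsum_ext. intros z _. destruct (in_box N z); ring.
Qed.

Lemma boxsum_mono g N M : (forall z, valid I z -> 0 <= g z) -> (N <= M)%nat ->
  boxsum I g N <= boxsum I g M.
Proof.
  intros H HNM. rewrite (boxsum_split g N M HNM).
  assert (0 <= boxsum I (fun z => if in_box N z then 0 else g z) M); [|lra].
  apply boxsum_nonneg. intros z Hz; destruct (in_box N z); [lra | auto].
Qed.

Lemma boxsum_indic g y M : valid I y -> (list_max y <= M)%nat ->
  boxsum I (fun z => g z * indic y z) M = g y.
Proof.
  intros Hy HM. rewrite boxsum_rsum, (rsum_ext_in _ _ (fun z => g z * indic z y))
    by (intros; rewrite indic_sym; auto).
  rewrite rsum_box_indic by apply Hy.
  rewrite (in_box_mono (list_max y) M y HM (in_box_list_max y)). reflexivity.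
Qed.

Lemma boxsum_tail_le g w N M : (N <= M)%nat -> (forall z, valid I z -> Rabs (g z) <= w z) ->
  Rabs (boxsum I g M - boxsum I g N) <= boxsum I w M - boxsum I w N.
Proof.
  intros HNM H. rewrite (boxsum_split g N M HNM), (boxsum_split w N M HNM).
  ring_simplify (boxsum I g N + boxsum I (fun z => if in_box N z then 0 else g z) M - boxsum I g N).
  ring_simplify (boxsum I w N + boxsum I (fun z => if in_box N z then 0 else w z) M - boxsum I w N).
  eapply Rle_trans; [apply boxsum_abs|]. apply boxsum_le. intros z Hz.
  destruct (in_box N z); [rewrite Rabs_R0; lra | auto].
Qed.

Lemma boxsum_cv_dominated g w lw : (forall z, valid I z -> Rabs (g z) <= w z) ->
  Un_cv (boxsum I w) lw -> exists s, Un_cv (boxsum I g) s.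
Proof.
  intros H Hw.
  assert (Hc : Cauchy_crit (boxsum I g)).
  { intros e He. destruct (CV_Cauchy (boxsum I w) (exist _ lw Hw) e He) as [N HN]. exists N.
    intros n m Hn Hm. unfold Rdist in *. destruct (Nat.le_ge_cases n m) as [Hnm|Hnm].
    - rewrite Rabs_minus_sym. eapply Rle_lt_trans; [apply boxsum_tail_le; eauto|].
      eapply Rle_lt_trans; [apply Rle_abs | apply HN; auto].
    - eapply Rle_lt_trans; [apply boxsum_tail_le; eauto|].
      eapply Rle_lt_trans; [apply Rle_abs | apply HN; auto]. }
  destruct (R_complete _ Hc) as [s Hs]. exists s; auto.
Qed.

Lemma boxsum_cv_bounded w B : (forall z, valid I z -> 0 <= w z) ->
  (forall N, boxsum I w N <= B) -> exists l, Un_cv (boxsum I w) l /\ l <= B.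
Proof.
  intros H HB.
  assert (Hg : Un_growing (boxsum I w)) by (intros n; apply boxsum_mono; auto).
  destruct (growing_cv _ Hg) as [l Hl]; [exists B; intros x [n ->]; auto|].
  exists l. split; auto. apply (cv_le_eventually _ _ _ 0 Hl). auto.
Qed.

End BoxSums.

(** * The queueing kernel *)

Section Model.
Variables (I : nat) (p a : R) (q : nat -> R).
Hypothesis HI : (1 <= I)%nat.
Hypothesis Hp : 0 < p < 1.
Hypothesis Hq0 : q 0%nat < 1.
Hypothesis Hqdec : forall i, (S i < I)%nat -> q (S i) < q i.
Hypothesis HqI : 2 * p < q (I - 1)%nat.
Hypothesis Ha : 0 < a.
Hypothesis Hadrift : p * (exp a - 1) < q (I - 1)%nat / 2 * (1 - exp (- a)).

Local Notation θ := (theta I).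
Local Notation Φ := (Phi I a).

Lemma q_ge_last i : (i < I)%nat -> q (I - 1)%nat <= q i.
Proof.
  intros Hi. remember (I - 1 - i)%nat as d eqn:Hd. revert i Hi Hd.
  induction d as [|d IH]; intros i Hi Hd.
  - replace i with (I - 1)%nat by lia. lra.
  - specialize (Hqdec i ltac:(lia)). specialize (IH (S i) ltac:(lia) ltac:(lia)). lra.
Qed.

Lemma q_range i : (i < I)%nat -> 0 < q i < 1.
Proof.
  intros Hi. split; [assert (H := q_ge_last i Hi); lra|].
  induction i as [|i IH]; [lra|]. specialize (Hqdec i Hi). specialize (IH ltac:(lia)). lra.
Qed.

Lemma q_div_range i n : (i < I)%nat -> n = 0%nat \/ 0 <= q i / INR n <= 1.
Proof.
  intros Hi. destruct n as [|n]; [left; reflexivity | right].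
  assert (Hq := q_range i Hi). assert (1 <= INR (S n)) by (apply (le_INR 1); lia).
  split; [apply Rmult_le_pos; [lra | apply Rlt_le, Rinv_0_lt_compat; lra]|].
  apply Rle_trans with (q i / 1); [|lra]. apply Rmult_le_compat_l; [lra|].
  apply Rinv_le_contravar; lra.
Qed.

Lemma arrival_pmf_nonneg xi : 0 <= arrival_pmf p xi.
Proof. unfold arrival_pmf; destruct (Nat.eqb xi 1); lra. Qed.

Section Policy.
Variable v : state -> nat.

Local Notation T := (trans I p q v).
Local Notation P := (Pf I p q v).
Local Notation E := (expect I p q v).

Definition arrival_to (x : state) (xi i : nat) : nat := if Nat.eqb i (v x) then xi else 0%nat.

Definition coord_kernel (x : state) (xi i j : nat) : R :=
  dep_pmf (nth i x 0%nat) (q i / INR (nth i x 0%nat))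
    (Z.of_nat (nth i x 0%nat) + Z.of_nat (arrival_to x xi i) - Z.of_nat j).

(** [E[G(x_i - D_i + e_i)]] for the queue [i] when the arrival indicator is [xi]. *)
Definition coord_moment (x : state) (xi i : nat) (G : nat -> R) : R :=
  let n := nth i x 0%nat in let r := q i / INR n in
  sum_f_R0 (fun k => C n k * r ^ k * (1 - r) ^ (n - k) * G (n + arrival_to x xi i - k)%nat) n.

Lemma trans_coord x y : T x y =
  rsum [0%nat; 1%nat] (fun xi => arrival_pmf p xi *
    rprod (seq 0 I) (fun i => coord_kernel x xi i (nth i y 0%nat))).
Proof. reflexivity. Qed.

Lemma arrival_to_le x xi i : (xi <= 1)%nat -> (arrival_to x xi i <= 1)%nat.
Proof. unfold arrival_to; destruct (Nat.eqb i (v x)); lia. Qed.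

Lemma coord_kernel_nonneg x xi i j : (i < I)%nat -> 0 <= coord_kernel x xi i j.
Proof. intros Hi. apply dep_pmf_nonneg, q_div_range, Hi. Qed.

Lemma trans_nonneg x y : 0 <= T x y.
Proof.
  rewrite trans_coord. apply rsum_nonneg. intros xi _.
  apply Rmult_le_pos; [apply arrival_pmf_nonneg|]. apply rprod_nonneg.
  intros i Hi. apply in_seq in Hi. apply coord_kernel_nonneg. lia.
Qed.

Lemma trans_out_of_box x z : valid I z -> in_box (S (list_max x)) z = false -> T x z = 0.
Proof.
  intros Hz Hb. destruct (in_box_false _ _ Hb) as [i [Hi1 Hi2]].
  rewrite trans_coord, <- (rsum_zero [0%nat; 1%nat]). apply rsum_ext_in.
  intros xi Hxi. rewrite (rprod_zero _ _ i); [ring | |].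
  - apply in_seq. unfold valid in Hz. lia.
  - unfold coord_kernel. apply dep_pmf_neg.
    assert (Hm := nth_le_list_max x i).
    assert (arrival_to x xi i <= 1)%nat by (apply arrival_to_le; simpl in Hxi; lia). lia.
Qed.

Lemma Pf_def g x : P g x = rsum (box (S (list_max x)) I) (fun z => T x z * g z).
Proof. reflexivity. Qed.

Lemma Pf_rsum_box g x M : (S (list_max x) <= M)%nat ->
  P g x = rsum (box M I) (fun z => T x z * g z).
Proof.
  intros HM. rewrite Pf_def. symmetry. apply rsum_box_trunc; auto.
  intros z Hz Hb. rewrite trans_out_of_box; auto. ring.
Qed.

Lemma Pf_ext g h x : (forall z, valid I z -> g z = h z) -> P g x = P h x.
Proof. intros H. apply rsum_ext_in. intros z Hz. apply In_box in Hz. rewrite H; [|apply Hz]. reflexivity. Qed.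

Lemma Pf_mono g h x : (forall z, valid I z -> g z <= h z) -> P g x <= P h x.
Proof.
  intros H. apply rsum_le. intros z Hz. apply In_box in Hz.
  apply Rmult_le_compat_l; [apply trans_nonneg | apply H, Hz].
Qed.

Lemma Pf_nonneg g x : (forall z, valid I z -> 0 <= g z) -> 0 <= P g x.
Proof.
  intros H. apply rsum_nonneg. intros z Hz. apply In_box in Hz.
  apply Rmult_le_pos; [apply trans_nonneg | apply H, Hz].
Qed.

Lemma Pf_plus g h x : P (fun z => g z + h z) x = P g x + P h x.
Proof. rewrite !Pf_def. rewrite <- rsum_plus. apply rsum_ext_in. intros; ring. Qed.

Lemma Pf_minus g h x : P (fun z => g z - h z) x = P g x - P h x.
Proof. rewrite !Pf_def. rewrite <- rsum_minus. apply rsum_ext_in. intros; ring. Qed.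

Lemma Pf_scal c g x : P (fun z => c * g z) x = c * P g x.
Proof. rewrite !Pf_def. rewrite <- rsum_scal. apply rsum_ext_in. intros; ring. Qed.

Lemma Pf_rsum {A} (l : list A) (F : A -> state -> R) x :
  P (fun z => rsum l (fun y => F y z)) x = rsum l (fun y => P (F y) x).
Proof.
  rewrite Pf_def.
  transitivity (rsum (box (S (list_max x)) I) (fun z => rsum l (fun y => T x z * F y z))).
  - apply rsum_ext_in. intros. rewrite rsum_scal. reflexivity.
  - apply rsum_swap.
Qed.

Lemma Pf_abs g x : Rabs (P g x) <= P (fun z => Rabs (g z)) x.
Proof.
  eapply Rle_trans; [apply rsum_abs|]. apply rsum_le. intros z _.
  rewrite Rabs_mult, (Rabs_right (T x z)) by (apply Rle_ge, trans_nonneg). lra.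
Qed.

Lemma Pf_rprod x G : valid I x ->
  P (fun z => rprod (seq 0 I) (fun i => G i (nth i z 0%nat))) x =
  rsum [0%nat; 1%nat] (fun xi => arrival_pmf p xi *
    rprod (seq 0 I) (fun i => coord_moment x xi i (G i))).
Proof.
  intros Hx. rewrite !Pf_def.
  transitivity (rsum (box (S (list_max x)) I) (fun z => rsum [0%nat; 1%nat] (fun xi =>
    arrival_pmf p xi * rprod (seq 0 I) (fun i => coord_kernel x xi i (nth i z 0%nat)
                                                 * G i (nth i z 0%nat))))).
  { apply rsum_ext_in. intros z _. rewrite trans_coord, Rmult_comm, <- rsum_scal.
    apply rsum_ext_in. intros xi _. rewrite rprod_mult. ring. }
  rewrite rsum_swap. apply rsum_ext_in. intros xi Hxi. rewrite rsum_scal. f_equal.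
  rewrite (rsum_box_rprod _ _ (fun i j => coord_kernel x xi i j * G i j)).
  apply rprod_ext_in. intros i _. unfold coord_kernel, coord_moment.
  apply rsum_dep_pmf_shift.
  assert (Hm := nth_le_list_max x i).
  assert (arrival_to x xi i <= 1)%nat by (apply arrival_to_le; simpl in Hxi; lia). lia.
Qed.

Lemma coord_moment_one x xi i : coord_moment x xi i (fun _ => 1) = 1.
Proof. apply binomial_pmf_sum. Qed.

Lemma Pf_one x : valid I x -> P (fun _ => 1) x = 1.
Proof.
  intros Hx. assert (H := Pf_rprod x (fun _ _ => 1) Hx). cbv beta in H.
  rewrite (Pf_ext _ (fun _ => 1)) in H by (intros; apply rprod_one).
  rewrite H, (rsum_ext_in _ _ (fun xi => arrival_pmf p xi)).
  - unfold arrival_pmf; simpl. lra.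
  - intros xi _. rewrite (rprod_ext_in _ _ (fun _ => 1)), rprod_one; [ring|].
    intros. apply coord_moment_one.
Qed.

Lemma Pf_const c x : valid I x -> P (fun _ => c) x = c.
Proof.
  intros Hx. rewrite (Pf_ext _ (fun _ => c * 1)), Pf_scal, Pf_one by (auto; intros; ring). ring.
Qed.

Lemma Pf_coord x i0 G : valid I x -> (i0 < I)%nat ->
  P (fun z => G (nth i0 z 0%nat)) x =
  rsum [0%nat; 1%nat] (fun xi => arrival_pmf p xi * coord_moment x xi i0 G).
Proof.
  intros Hx Hi0.
  assert (H := Pf_rprod x (fun i j => if Nat.eqb i i0 then G j else 1) Hx). cbv beta in H.
  rewrite (Pf_ext _ (fun z => G (nth i0 z 0%nat))) in H.
  - rewrite H. apply rsum_ext_in. intros xi _. f_equal.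
    rewrite <- (rprod_seq_delta I i0 (coord_moment x xi i0 G) Hi0).
    apply rprod_ext_in. intros i _. destruct (Nat.eqb i i0) eqn:E.
    + apply Nat.eqb_eq in E. subst. reflexivity.
    + apply coord_moment_one.
  - intros z _. rewrite <- (rprod_seq_delta I i0 (G (nth i0 z 0%nat)) Hi0).
    apply rprod_ext_in. intros i _. destruct (Nat.eqb i i0) eqn:E; [|reflexivity].
    apply Nat.eqb_eq in E. subst. reflexivity.
Qed.

Lemma Pf_indic x y : valid I y -> P (indic y) x = T x y.
Proof.
  intros Hy. rewrite !Pf_def.
  rewrite (rsum_ext_in _ _ (fun z => T x z * indic z y)) by (intros; rewrite indic_sym; auto).
  rewrite rsum_box_indic by apply Hy.
  destruct (in_box (S (list_max x)) y) eqn:E; [reflexivity|]. rewrite trans_out_of_box; auto.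
Qed.

Lemma trans_le_1 x y : valid I x -> valid I y -> T x y <= 1.
Proof.
  intros Hx Hy. rewrite <- (Pf_indic x y Hy), <- (Pf_one x Hx).
  apply Pf_mono. intros. apply indic_range.
Qed.

Lemma expect_ext t g h x : (forall z, valid I z -> g z = h z) -> valid I x -> E t g x = E t h x.
Proof.
  intros H. revert x. induction t as [|t IH]; intros x Hx; simpl; auto.
  apply Pf_ext. intros; apply IH; auto.
Qed.

Lemma expect_scal t c g x : E t (fun z => c * g z) x = c * E t g x.
Proof. revert x; induction t as [|t IH]; intros x; simpl; auto. rewrite <- Pf_scal. apply Pf_ext. auto. Qed.

Lemma expect_plus t g h x : E t (fun z => g z + h z) x = E t g x + E t h x.
Proof. revert x; induction t as [|t IH]; intros x; simpl; auto. rewrite <- Pf_plus. apply Pf_ext. auto. Qed.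

Lemma expect_minus t g h x : E t (fun z => g z - h z) x = E t g x - E t h x.
Proof. revert x; induction t as [|t IH]; intros x; simpl; auto. rewrite <- Pf_minus. apply Pf_ext. auto. Qed.

Lemma expect_rsum {A} t (l : list A) F x :
  E t (fun z => rsum l (fun y => F y z)) x = rsum l (fun y => E t (F y) x).
Proof. revert x; induction t as [|t IH]; intros x; simpl; auto. rewrite <- Pf_rsum. apply Pf_ext. auto. Qed.

Lemma expect_const t c x : valid I x -> E t (fun _ => c) x = c.
Proof.
  revert x; induction t as [|t IH]; intros x Hx; simpl; auto.
  rewrite (Pf_ext _ (fun _ => c)) by auto. apply Pf_const; auto.
Qed.

Lemma expect_mono t g h x : (forall z, valid I z -> g z <= h z) -> valid I x -> E t g x <= E t h x.
Proof.
  intros H. revert x. induction t as [|t IH]; intros x Hx; simpl; auto.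
  apply Pf_mono. intros; apply IH; auto.
Qed.

Lemma expect_nonneg t g x : valid I x -> (forall z, valid I z -> 0 <= g z) -> 0 <= E t g x.
Proof. intros Hx H. rewrite <- (expect_const t 0 x Hx). apply expect_mono; auto. Qed.

Lemma expect_abs t g x : valid I x -> Rabs (E t g x) <= E t (fun z => Rabs (g z)) x.
Proof.
  revert x. induction t as [|t IH]; intros x Hx; simpl; [lra|].
  eapply Rle_trans; [apply Pf_abs | apply Pf_mono; intros; apply IH; auto].
Qed.

Lemma expect_abs_le t h H x : valid I x -> (forall z, valid I z -> Rabs (h z) <= H) ->
  Rabs (E t h x) <= H.
Proof.
  intros Hx Hh. eapply Rle_trans; [apply expect_abs; auto|].
  rewrite <- (expect_const t H x Hx). apply expect_mono; auto.
Qed.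

Lemma expect_add s t g x : E (s + t) g x = E s (E t g) x.
Proof. revert x; induction s as [|s IH]; intros x; simpl; auto. apply Pf_ext. auto. Qed.

Lemma expect_S t g x : E (S t) g x = E t (P g) x.
Proof. rewrite <- Nat.add_1_r, expect_add. reflexivity. Qed.

(** In [t] steps from [x] the chain stays in the box [\[0, max x + t\]^I]. *)
Lemma expect_local t g h x : valid I x ->
  (forall z, valid I z -> in_box (list_max x + t) z = true -> g z = h z) -> E t g x = E t h x.
Proof.
  revert x. induction t as [|t IH]; intros x Hx H; simpl.
  - apply H; auto. rewrite Nat.add_0_r. apply in_box_list_max.
  - rewrite !Pf_def. apply rsum_ext_in. intros z Hz. apply In_box in Hz. destruct Hz as [Hz1 Hz2].
    f_equal. apply IH; auto. intros w Hw Hb. apply H; auto.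
    eapply in_box_mono; [|apply Hb]. assert (Hm := list_max_le_in_box _ _ Hz2). lia.
Qed.

Lemma Pn_nonneg t x y : valid I x -> 0 <= Pn I p q v t x y.
Proof. intros Hx. apply expect_nonneg; auto. intros; apply indic_range. Qed.

Lemma Pn_S t x y : valid I x -> valid I y -> Pn I p q v (S t) x y = E t (fun z => T z y) x.
Proof. intros Hx Hy. unfold Pn. rewrite expect_S. apply expect_ext; auto. intros; apply Pf_indic; auto. Qed.

(** * Drift, small set and the weighted seminorm *)

Lemma Phi_rsum z : Φ z = rsum (seq 0 I) (fun i => exp (a * INR (nth i z 0%nat))).
Proof. apply fold_Rplus_map. Qed.

Lemma exp_coord_le_Phi z i : (i < I)%nat -> exp (a * INR (nth i z 0%nat)) <= Φ z.
Proof.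
  intros Hi. rewrite Phi_rsum.
  apply (term_le_rsum _ (fun i => exp (a * INR (nth i z 0%nat)))).
  - intros; apply Rlt_le, exp_pos.
  - apply in_seq; lia.
Qed.

Lemma Phi_ge_1 z : 1 <= Φ z.
Proof.
  eapply Rle_trans; [|apply (exp_coord_le_Phi z 0); lia].
  rewrite <- exp_0. apply exp_le, Rmult_le_pos; [lra | apply pos_INR].
Qed.

Lemma Phi_nonneg z : 0 <= Φ z.
Proof. assert (H := Phi_ge_1 z). lra. Qed.

Lemma Phi_theta : Φ θ = INR I.
Proof.
  rewrite Phi_rsum, (rsum_ext_in _ _ (fun _ => 1)), rsum_const, length_seq; [ring|].
  intros i _. rewrite nth_theta. simpl. rewrite Rmult_0_r. apply exp_0.
Qed.

Lemma Phi_in_box_le z N : in_box N z = true -> Φ z <= INR I * exp (a * INR N).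
Proof.
  intros H. rewrite Phi_rsum. rewrite <- (length_seq I 0) at 2. rewrite <- rsum_const.
  apply rsum_le. intros i _. apply exp_le, Rmult_le_compat_l; [lra|].
  apply le_INR, in_box_nth, H.
Qed.

Lemma coord_le_Phi z i : (i < I)%nat -> a * INR (nth i z 0%nat) <= Φ z.
Proof.
  intros Hi. eapply Rle_trans; [|apply exp_coord_le_Phi; eauto].
  eapply Rle_trans; [|apply exp_ineq1_le]. lra.
Qed.

Lemma Phi_out_of_box z N : valid I z -> in_box N z = false -> 1 <= exp (- a) ^ S N * Φ z.
Proof.
  intros Hz Hb. destruct (in_box_false N z Hb) as [i [Hi1 Hi2]]. unfold valid in Hz.
  apply Rle_trans with (exp (- a) ^ S N * exp (a * INR (nth i z 0%nat))).
  - rewrite exp_pow_INR, <- exp_plus, <- exp_0. apply exp_le.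
    assert (INR (S N) <= INR (nth i z 0%nat)) by (apply le_INR; lia). nra.
  - apply Rmult_le_compat_l; [apply pow_le, Rlt_le, exp_pos | apply exp_coord_le_Phi; lia].
Qed.

Lemma total_le_Phi z : total I z <= Φ z / a.
Proof.
  unfold total. rewrite fold_Rplus_map, Phi_rsum. unfold Rdiv.
  rewrite Rmult_comm, <- rsum_scal. apply rsum_le. intros i _.
  assert (H := exp_ineq1_le (a * INR (nth i z 0%nat))). assert (0 <= INR (nth i z 0%nat)) by apply pos_INR.
  apply (Rmult_le_reg_l a); auto. rewrite <- Rmult_assoc, Rinv_r by lra. lra.
Qed.

Lemma total_theta : total I θ = 0.
Proof.
  unfold total. rewrite fold_Rplus_map, (rsum_ext_in _ _ (fun _ => 0)); [apply rsum_zero|].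
  intros; rewrite nth_theta; reflexivity.
Qed.

(** Constants of the drift inequality [P Φ <= γ Φ + b]. *)
Definition drift_rate : R :=
  (1 + p * (exp a - 1)) * (1 - q (I - 1)%nat / 2 * (1 - exp (- a))).
Definition drift_const : R := INR I * (1 + p * (exp a - 1)).

Local Notation γ := drift_rate.
Local Notation b := drift_const.

Lemma exp_neg_a_range : 0 < exp (- a) < 1.
Proof. split; [apply exp_pos | rewrite <- exp_0; apply exp_increasing; lra]. Qed.

Lemma drift_rate_range : 0 < γ < 1.
Proof.
  assert (Hea : 1 < exp a) by (rewrite <- exp_0; apply exp_increasing; lra).
  assert (Hna := exp_neg_a_range). assert (Hq := q_range (I - 1) ltac:(lia)).
  assert (0 < p * (exp a - 1)) by (apply Rmult_lt_0_compat; lra).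
  assert (0 < q (I - 1)%nat / 2 * (1 - exp (- a)) < 1 / 2) by (split; nra).
  unfold drift_rate. split; nra.
Qed.

Lemma drift_const_ge_1 : 1 <= b.
Proof.
  assert (Hea : 1 < exp a) by (rewrite <- exp_0; apply exp_increasing; lra).
  assert (1 <= INR I) by (apply (le_INR 1); auto).
  unfold drift_const. assert (0 < p * (exp a - 1)) by (apply Rmult_lt_0_compat; lra). nra.
Qed.

(** The small set is [{Φ <= small_level}]; on it every coordinate is at most [small_coord]. *)
Definition small_level : R := 4 * (1 + b) / (1 - γ).
Definition small_coord : nat := S (Z.to_nat (up (small_level / a))).
Definition minor_const : R := (1 - p) * ((q (I - 1)%nat / INR small_coord) ^ small_coord) ^ I.

Local Notation α := minor_const.

Lemma small_level_pos : 0 < small_level.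
Proof.
  assert (H := drift_const_ge_1). assert (H2 := drift_rate_range).
  apply Rmult_lt_0_compat; [lra | apply Rinv_0_lt_compat; lra].
Qed.

Lemma small_level_gap : small_level * (1 - γ) = 4 * (1 + b).
Proof. assert (H := drift_rate_range). unfold small_level. field. lra. Qed.

Lemma INR_up_Z_to_nat r : r <= INR (Z.to_nat (up r)).
Proof.
  destruct (archimed r) as [H1 _]. destruct (Z_lt_le_dec (up r) 0).
  - assert (IZR (up r) < 0) by (apply IZR_lt; auto). assert (H0 := pos_INR (Z.to_nat (up r))). lra.
  - rewrite INR_IZR_INZ, Z2Nat.id by auto. lra.
Qed.

Lemma coord_le_small_coord x i : Φ x <= small_level -> (i < I)%nat ->
  (nth i x 0%nat <= small_coord)%nat.
Proof.
  intros HR Hi. apply INR_le. unfold small_coord. rewrite S_INR.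
  assert (H := coord_le_Phi x i Hi). assert (H2 := INR_up_Z_to_nat (small_level / a)).
  assert (INR (nth i x 0%nat) <= small_level / a); [|lra].
  apply (Rmult_le_reg_l a); auto. replace (a * (small_level / a)) with small_level by (field; lra). lra.
Qed.

Lemma small_ratio_range : 0 < q (I - 1)%nat / INR small_coord <= 1.
Proof.
  assert (1 <= INR small_coord) by (apply (le_INR 1); unfold small_coord; lia).
  assert (Hq := q_range (I - 1) ltac:(lia)). split.
  - apply Rmult_lt_0_compat; [lra | apply Rinv_0_lt_compat; lra].
  - apply Rle_trans with (q (I - 1)%nat / 1); [|lra]. apply Rmult_le_compat_l; [lra|].
    apply Rinv_le_contravar; lra.
Qed.

Lemma minor_const_range : 0 < α <= 1.
Proof.
  assert (H := small_ratio_range). unfold minor_const.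
  set (r := q (I - 1)%nat / INR small_coord) in *.
  assert (0 < (r ^ small_coord) ^ I) by (apply pow_lt, pow_lt; lra).
  assert ((r ^ small_coord) ^ I <= 1).
  { apply Rle_trans with (1 ^ I); [|rewrite pow1; lra]. apply pow_incr. split; [apply pow_le; lra|].
    apply Rle_trans with (1 ^ small_coord); [apply pow_incr; lra | rewrite pow1; lra]. }
  split; [apply Rmult_lt_0_compat; lra | nra].
Qed.

(** [β] weights [Φ] in the Hairer-Mattingly seminorm ([weighted_lip] below), in which [P]
    contracts at rate [ρ]. *)
Definition lip_weight : R := α / (2 * b + 2).
Definition contraction_rate : R := Rmax (1 - lip_weight) ((1 + γ) / 2).

Local Notation β := lip_weight.
Local Notation ρ := contraction_rate.

Lemma lip_weight_range : 0 < β /\ 2 * β * b < α /\ β <= α / 2.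
Proof.
  unfold lip_weight. assert (H := minor_const_range). assert (H2 := drift_const_ge_1).
  split; [apply Rmult_lt_0_compat; [lra | apply Rinv_0_lt_compat; lra]|].
  split; [apply (Rmult_lt_reg_r (2 * b + 2)) | apply (Rmult_le_reg_r (2 * b + 2))];
    try lra; unfold Rdiv; field_simplify; nra.
Qed.

Lemma contraction_rate_range : 0 < ρ < 1 /\ 1 - β <= ρ /\ (1 + γ) / 2 <= ρ.
Proof.
  unfold contraction_rate. assert (H := lip_weight_range). assert (H2 := drift_rate_range).
  assert (H3 := minor_const_range).
  split; [split|split].
  - eapply Rlt_le_trans; [|apply Rmax_r]; lra.
  - apply Rmax_lub_lt; lra.
  - apply Rmax_l.
  - apply Rmax_r.
Qed.

(** Bound on [π Φ] for every stationary [π]. *)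
Definition Phi_stat_bound : R := b / (1 - γ).

Lemma Phi_stat_bound_pos : 0 < Phi_stat_bound.
Proof.
  assert (H := drift_const_ge_1). assert (H2 := drift_rate_range).
  apply Rmult_lt_0_compat; [lra | apply Rinv_0_lt_compat; lra].
Qed.

Lemma Phi_stat_bound_fixed : Phi_stat_bound = γ * Phi_stat_bound + b.
Proof. assert (H := drift_rate_range). unfold Phi_stat_bound. field. lra. Qed.

Definition weighted_lip (f : state -> R) (L : R) : Prop :=
  forall x y, valid I x -> valid I y -> Rabs (f x - f y) <= L * (2 + β * Φ x + β * Φ y).

Lemma weighted_lip_nonneg f L : weighted_lip f L -> 0 <= L.
Proof.
  intros H. specialize (H θ θ (theta_valid I) (theta_valid I)).
  rewrite Rminus_diag, Rabs_R0 in H. assert (H2 := Phi_nonneg θ). assert (H3 := lip_weight_range).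
  destruct (Rle_or_lt 0 L) as [|HL]; auto.
  assert (0 < 2 + β * Φ θ + β * Φ θ) by nra. nra.
Qed.

Lemma weighted_lip_center f L : weighted_lip f L ->
  exists c, forall z, valid I z -> Rabs (f z - c) <= L * (1 + β * Φ z).
Proof.
  intros HL.
  set (S := fun r => exists z, valid I z /\ r = f z - L * (1 + β * Φ z)).
  assert (Hb : bound S).
  { exists (f θ + L * (1 + β * Φ θ)). intros r [z [Hz ->]].
    specialize (HL z θ Hz (theta_valid I)). apply Rabs_le_between in HL. nra. }
  assert (Hne : exists r, S r) by (exists (f θ - L * (1 + β * Φ θ)), θ; split; auto; apply theta_valid).
  destruct (completeness S Hb Hne) as [m [Hm1 Hm2]].
  exists m. intros z Hz. apply Rabs_le. split.
  - assert (m <= f z + L * (1 + β * Φ z)); [|lra].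
    apply Hm2. intros r [w [Hw ->]]. specialize (HL w z Hw Hz). apply Rabs_le_between in HL. nra.
  - assert (f z - L * (1 + β * Φ z) <= m) by (apply Hm1; exists z; auto). lra.
Qed.

Lemma weighted_lip_of_Phi_bound f c : 0 <= c -> (forall z, valid I z -> Rabs (f z) <= c * Φ z) ->
  weighted_lip f (c / β).
Proof.
  intros Hc H x y Hx Hy. assert (Hb := lip_weight_range).
  eapply Rle_trans; [apply Rabs_sub_le|]. assert (H1 := H x Hx). assert (H2 := H y Hy).
  replace (c / β * (2 + β * Φ x + β * Φ y)) with (2 * (c / β) + c * Φ x + c * Φ y) by (field; lra).
  assert (0 <= c / β) by (apply Rmult_le_pos; [lra | apply Rlt_le, Rinv_0_lt_compat; lra]). lra.
Qed.

Lemma indic_le_Phi y z : Rabs (indic y z) <= 1 * Φ z.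
Proof.
  assert (H := Phi_ge_1 z). assert (H2 := indic_range y z).
  rewrite Rabs_right by lra. lra.
Qed.

(** Emptying every queue in one step with no arrival. *)
Lemma trans_theta_ge x : (1 - p) * rprod (seq 0 I) (fun i => (q i / INR (nth i x 0%nat)) ^ nth i x 0%nat)
  <= T x θ.
Proof.
  rewrite trans_coord, !rsum_cons, rsum_nil. unfold arrival_pmf. simpl Nat.eqb. cbv iota.
  assert (0 <= p * rprod (seq 0 I) (fun i => coord_kernel x 1 i (nth i θ 0%nat))).
  { apply Rmult_le_pos; [lra|]. apply rprod_nonneg. intros i Hi. apply in_seq in Hi.
    apply coord_kernel_nonneg. lia. }
  enough (rprod (seq 0 I) (fun i => coord_kernel x 0 i (nth i θ 0%nat)) =
          rprod (seq 0 I) (fun i => (q i / INR (nth i x 0%nat)) ^ nth i x 0%nat)) as -> by lra.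
  apply rprod_ext_in. intros i _. unfold coord_kernel, arrival_to. rewrite nth_theta.
  replace (Z.of_nat (nth i x 0%nat) + Z.of_nat (if (i =? v x)%nat then 0%nat else 0%nat) - Z.of_nat 0)%Z
    with (Z.of_nat (nth i x 0%nat)) by (destruct (i =? v x)%nat; lia).
  rewrite dep_pmf_of_nat, Nat.leb_refl, Nat.sub_diag. unfold C. rewrite Nat.sub_diag. simpl.
  field. apply not_0_INR, fact_neq_0.
Qed.

Lemma trans_theta_pos x : 0 < T x θ.
Proof.
  eapply Rlt_le_trans; [|apply trans_theta_ge]. apply Rmult_lt_0_compat; [lra|].
  apply rprod_pos. intros i Hi. apply in_seq in Hi.
  destruct (nth i x 0%nat) as [|n]; [simpl; lra|].
  apply pow_lt, Rmult_lt_0_compat; [apply q_range; lia | apply Rinv_0_lt_compat, lt_0_INR; lia].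
Qed.

Lemma trans_theta_ge_minor x : Φ x <= small_level -> α <= T x θ.
Proof.
  intros HR. eapply Rle_trans; [|apply trans_theta_ge]. unfold minor_const.
  apply Rmult_le_compat_l; [lra|].
  assert (Hr := small_ratio_range). set (r := q (I - 1)%nat / INR small_coord) in *.
  replace ((r ^ small_coord) ^ I) with ((r ^ small_coord) ^ length (seq 0 I))
    by (rewrite length_seq; reflexivity).
  apply pow_le_rprod; [apply pow_le; lra|].
  intros i Hi. apply in_seq in Hi. assert (HM := coord_le_small_coord x i HR ltac:(lia)).
  destruct (nth i x 0%nat) as [|n] eqn:En.
  - rewrite pow_O. apply Rle_trans with (1 ^ small_coord); [apply pow_incr; lra | rewrite pow1; lra].
  - apply Rle_trans with (r ^ S n); [apply pow_le_pow_le1; [lra | auto]|].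
    apply pow_incr. split; [lra|]. unfold r.
    assert (Hq := q_ge_last i ltac:(lia)). assert (Hq2 := q_range (I - 1) ltac:(lia)).
    assert (1 <= INR (S n)) by (apply (le_INR 1); lia).
    assert (INR (S n) <= INR small_coord) by (apply le_INR; auto).
    apply Rmult_le_compat; try lra; [apply Rlt_le, Rinv_0_lt_compat; lra | apply Rinv_le_contravar; lra].
Qed.

Lemma Pf_minorization x g : Φ x <= small_level -> (forall z, valid I z -> 0 <= g z) ->
  α * g θ <= P g x.
Proof.
  intros HR Hg. apply Rle_trans with (T x θ * g θ).
  - apply Rmult_le_compat_r; [apply Hg, theta_valid | apply trans_theta_ge_minor; auto].
  - rewrite Pf_def. apply (term_le_rsum _ (fun z => T x z * g z)); [|apply theta_In_box].
    intros z Hz. apply In_box in Hz. apply Rmult_le_pos; [apply trans_nonneg | apply Hg, Hz].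
Qed.

Lemma binomial_exp_factor_le i n : (i < I)%nat -> (1 <= n)%nat ->
  (q i / INR n * exp (- a) + (1 - q i / INR n)) ^ n <= 1 - q (I - 1)%nat / 2 * (1 - exp (- a)).
Proof.
  intros Hi Hn. assert (Hq := q_range i Hi). assert (Hql := q_ge_last i Hi).
  assert (Hna := exp_neg_a_range). assert (1 <= INR n) by (apply (le_INR 1); auto).
  replace (q i / INR n * exp (- a) + (1 - q i / INR n)) with (1 - q i * (1 - exp (- a)) / INR n)
    by (field; lra).
  eapply Rle_trans; [apply pow_one_minus_div_le; [split; nra | auto]|].
  assert (q (I - 1)%nat * (1 - exp (- a)) <= q i * (1 - exp (- a))) by (apply Rmult_le_compat_r; lra).
  lra.
Qed.

Lemma Pf_exp_coord_le x i : valid I x -> (i < I)%nat ->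
  P (fun z => exp (a * INR (nth i z 0%nat))) x
  <= γ * exp (a * INR (nth i x 0%nat)) + (1 + p * (exp a - 1)).
Proof.
  intros Hx Hi. rewrite (Pf_coord x i (fun j => exp (a * INR j))) by auto.
  rewrite !rsum_cons, rsum_nil. unfold arrival_pmf, coord_moment. simpl Nat.eqb. cbv iota zeta.
  rewrite !binomial_exp_moment.
  set (n := nth i x 0%nat). set (B := (q i / INR n * exp (- a) + (1 - q i / INR n)) ^ n).
  replace (arrival_to x 0 i) with 0%nat by (unfold arrival_to; destruct (i =? v x)%nat; auto).
  rewrite Nat.add_0_r.
  assert (He : exp (a * INR (n + arrival_to x 1 i)) <= exp (a * INR n) * exp a).
  { rewrite <- exp_plus. apply exp_le. rewrite plus_INR.
    assert (INR (arrival_to x 1 i) <= 1) by (apply (le_INR _ 1), arrival_to_le; lia). nra. }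
  assert (HB0 : 0 <= B).
  { apply pow_le. destruct (q_div_range i n Hi) as [E|Hr].
    - rewrite E. unfold Rdiv. simpl. rewrite Rinv_0. lra.
    - assert (Hna := exp_neg_a_range). nra. }
  assert (Hgam := drift_rate_range). assert (Hen : 0 < exp (a * INR n)) by apply exp_pos.
  assert (Hsum : (1 - p) * (exp (a * INR n) * B) + p * (exp (a * INR (n + arrival_to x 1 i)) * B) + 0
                 <= (1 + p * (exp a - 1)) * exp (a * INR n) * B).
  { assert (p * (exp (a * INR (n + arrival_to x 1 i)) * B) <= p * (exp (a * INR n) * exp a * B)); [|nra].
    apply Rmult_le_compat_l; [lra|]. apply Rmult_le_compat_r; auto. }
  destruct n as [|n'] eqn:En.
  - assert (HB1 : B = 1) by reflexivity.
    assert (He0 : exp (a * INR 0) = 1) by (simpl; rewrite Rmult_0_r; apply exp_0).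
    rewrite He0, HB1 in Hsum |- *. lra.
  - assert (HBw := binomial_exp_factor_le i (S n') Hi ltac:(lia)). fold B in HBw.
    assert (0 < 1 + p * (exp a - 1))
      by (assert (1 < exp a) by (rewrite <- exp_0; apply exp_increasing; lra); nra).
    unfold drift_rate. rewrite <- En in *.
    assert ((1 + p * (exp a - 1)) * exp (a * INR n) * B
            <= (1 + p * (exp a - 1)) * exp (a * INR n) * (1 - q (I - 1)%nat / 2 * (1 - exp (- a))))
      by (apply Rmult_le_compat_l; nra).
    nra.
Qed.

Lemma Pf_Phi_drift x : valid I x -> P Φ x <= γ * Φ x + b.
Proof.
  intros Hx. rewrite (Pf_ext _ _ _ (fun z _ => Phi_rsum z)), Pf_rsum, Phi_rsum.
  unfold drift_const.
  replace (INR I * (1 + p * (exp a - 1))) with (rsum (seq 0 I) (fun _ => 1 + p * (exp a - 1)))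
    by (rewrite rsum_const, length_seq; ring).
  rewrite <- rsum_scal, <- rsum_plus.
  apply rsum_le. intros i Hi. apply in_seq in Hi. apply Pf_exp_coord_le; auto. lia.
Qed.

Lemma expect_Phi_le t x : valid I x -> E t Φ x <= γ ^ t * Φ x + Phi_stat_bound.
Proof.
  revert x. induction t as [|t IH]; intros x Hx.
  - simpl. assert (H := Phi_stat_bound_pos). lra.
  - rewrite expect_S.
    eapply Rle_trans; [apply (expect_mono t _ (fun z => γ * Φ z + b * 1)); auto|].
    { intros z Hz. rewrite Rmult_1_r. apply Pf_Phi_drift; auto. }
    rewrite expect_plus, expect_scal, expect_scal, expect_const by auto.
    specialize (IH x Hx). assert (Hg := drift_rate_range).
    assert (HB := Phi_stat_bound_fixed). simpl. nra.
Qed.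

(** * Contraction *)

Section Contraction.
Variables (g : state -> R) (L : R).
Hypothesis HL : 0 <= L.
Hypothesis Hg : forall z, valid I z -> Rabs (g z) <= L * (1 + β * Φ z).

Lemma Pf_weight_le w : valid I w -> P (fun z => L * (1 + β * Φ z)) w <= L * (1 + β * (γ * Φ w + b)).
Proof.
  intros Hw. rewrite (Pf_ext _ (fun z => L * 1 + (L * β) * Φ z)) by (intros; ring).
  rewrite Pf_plus, Pf_scal, Pf_scal, Pf_const by auto.
  assert (H := Pf_Phi_drift w Hw). assert (H2 := lip_weight_range).
  assert (0 <= L * β) by nra. nra.
Qed.

Lemma Pf_centered_le w : valid I w -> Rabs (P g w) <= L * (1 + β * (γ * Φ w + b)).
Proof.
  intros Hw. eapply Rle_trans; [apply Pf_abs|].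
  eapply Rle_trans; [apply Pf_mono, Hg | apply Pf_weight_le; auto].
Qed.

(** On the small set, part [α] of the mass sits at [θ]; the remainder is controlled by the drift. *)
Lemma Pf_centered_small w : valid I w -> Φ w <= small_level ->
  Rabs (P g w - α * g θ) <= L * (1 - α + β * (γ * Φ w + b)).
Proof.
  intros Hw HwR.
  set (h := fun z => L * (1 + β * Φ z)).
  assert (Hgh : forall z, valid I z -> - h z <= g z <= h z)
    by (intros z Hz; apply Rabs_le_between, Hg; auto).
  assert (Hhθ : L <= h θ).
  { unfold h. assert (Hb := lip_weight_range). assert (H0 := Phi_nonneg θ).
    assert (0 <= L * (β * Φ θ)) by (apply Rmult_le_pos; [lra | apply Rmult_le_pos; lra]). nra. }
  assert (Hθ := Hgh θ (theta_valid I)).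
  assert (Hm1 := Pf_minorization w (fun z => h z - g z) HwR
                   ltac:(intros z Hz; specialize (Hgh z Hz); lra)).
  assert (Hm2 := Pf_minorization w (fun z => h z + g z) HwR
                   ltac:(intros z Hz; specialize (Hgh z Hz); lra)).
  rewrite Pf_minus in Hm1. rewrite Pf_plus in Hm2.
  assert (H1 := Pf_weight_le w Hw). fold h in H1.
  assert (Hα := minor_const_range).
  apply Rabs_le. split; nra.
Qed.

End Contraction.

Lemma Pf_weighted_lip f L : weighted_lip f L -> weighted_lip (P f) (ρ * L).
Proof.
  intros HfL x y Hx Hy. assert (HL := weighted_lip_nonneg f L HfL).
  destruct (weighted_lip_center f L HfL) as [c Hc].
  set (g := fun z => f z - c).
  assert (HPf : forall w, valid I w -> P f w = P g w + c)
    by (intros w Hw; unfold g; rewrite Pf_minus, Pf_const; auto; ring).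
  rewrite (HPf x Hx), (HPf y Hy).
  replace (P g x + c - (P g y + c)) with (P g x - P g y) by ring.
  assert (Hρ := contraction_rate_range). assert (Hβ := lip_weight_range).
  assert (Hγ := drift_rate_range). assert (Hα := minor_const_range).
  assert (HΦx := Phi_nonneg x). assert (HΦy := Phi_nonneg y).
  assert (Hρβ : 0 <= (ρ - γ) * (β * (Φ x + Φ y))) by (apply Rmult_le_pos; nra).
  assert (Hcase : (Φ x <= small_level /\ Φ y <= small_level) \/ small_level <= Φ x + Φ y).
  { destruct (Rle_or_lt (Φ x) small_level), (Rle_or_lt (Φ y) small_level); [left | right..]; lra. }
  destruct Hcase as [[Hxs Hys]|Hlarge].
  - replace (P g x - P g y) with ((P g x - α * g θ) - (P g y - α * g θ)) by ring.
    eapply Rle_trans; [apply Rabs_sub_le|].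
    assert (H1 := Pf_centered_small g L HL Hc x Hx Hxs).
    assert (H2 := Pf_centered_small g L HL Hc y Hy Hys). nra.
  - eapply Rle_trans; [apply Rabs_sub_le|].
    assert (H1 := Pf_centered_le g L HL Hc x Hx). assert (H2 := Pf_centered_le g L HL Hc y Hy).
    assert (HR := small_level_gap). assert (HR0 := small_level_pos).
    assert ((ρ - γ) * (β * (Φ x + Φ y)) >= (1 - γ) / 2 * (β * small_level))
      by (apply Rle_ge, Rmult_le_compat; nra). nra.
Qed.

Lemma expect_weighted_lip t f L : weighted_lip f L -> weighted_lip (E t f) (ρ ^ t * L).
Proof.
  intros H. induction t as [|t IH]; [simpl; rewrite Rmult_1_l; auto|].
  simpl expect. rewrite <- tech_pow_Rmult, Rmult_assoc. apply Pf_weighted_lip; auto.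
Qed.

(** * Stationary distributions *)

Section Stationary.
Variable pi : state -> R.
Hypothesis Hpi : stationary I p q v pi.

Local Notation Σ := (boxsum I).

Lemma stat_nonneg z : valid I z -> 0 <= pi z.
Proof. apply Hpi. Qed.

Lemma stat_cv_1 : Un_cv (Σ pi) 1.
Proof. apply Hpi. Qed.

Lemma stat_boxsum_le_1 N : Σ pi N <= 1.
Proof. apply growing_ineq; [intros n; apply boxsum_mono; [apply stat_nonneg | lia] | apply stat_cv_1]. Qed.

Lemma stat_tail_small e : 0 < e -> exists N, 1 - Σ pi N < e.
Proof.
  intros He. destruct (stat_cv_1 e He) as [N HN]. exists N.
  specialize (HN N (le_n _)). unfold Rdist in HN. apply Rabs_def2 in HN. lra.
Qed.

Lemma stat_flow_le y N : valid I y -> Σ (fun x => pi x * T x y) N <= pi y.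
Proof.
  intros Hy. destruct Hpi as [_ [_ H3]]. destruct (H3 y Hy) as [_ Hc].
  apply growing_ineq; auto. intros n; apply boxsum_mono; [|lia]. intros z Hz.
  apply Rmult_le_pos; [apply stat_nonneg; auto | apply trans_nonneg].
Qed.

(** Up to the [π]-mass of the shell [box (S N) \ box N], [π] is invariant on bounded functions. *)
Lemma stat_invariance_step h H : (forall z, valid I z -> Rabs (h z) <= H) -> forall N,
  Rabs (Σ (fun x => pi x * P h x) N - Σ (fun z => pi z * h z) (S N)) <= H * (Σ pi (S N) - Σ pi N).
Proof.
  intros Hh N. set (flow := fun z => Σ (fun x => pi x * T x z) N).
  assert (HPbox : forall x g, In x (box N I) -> P g x = rsum (box (S N) I) (fun z => T x z * g z)).
  { intros x g Hx. apply In_box in Hx. apply Pf_rsum_box. apply le_n_S, list_max_le_in_box, Hx. }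
  assert (E1 : Σ (fun x => pi x * P h x) N = rsum (box (S N) I) (fun z => h z * flow z)).
  { rewrite boxsum_rsum.
    transitivity (rsum (box N I) (fun x => rsum (box (S N) I) (fun z => pi x * T x z * h z))).
    - apply rsum_ext_in. intros x Hx. rewrite HPbox, <- rsum_scal by auto. apply rsum_ext_in. intros; ring.
    - rewrite rsum_swap. apply rsum_ext_in. intros z _. unfold flow. rewrite boxsum_rsum, <- rsum_scal.
      apply rsum_ext_in. intros; ring. }
  assert (E2 : Σ pi N = rsum (box (S N) I) flow).
  { rewrite boxsum_rsum.
    transitivity (rsum (box N I) (fun x => rsum (box (S N) I) (fun z => pi x * T x z))).
    - apply rsum_ext_in. intros x Hx. rewrite rsum_scal.
      rewrite <- (Rmult_1_r (pi x)) at 1. f_equal. rewrite <- (Pf_one x) by (apply In_box in Hx; apply Hx).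
      rewrite HPbox by auto. apply rsum_ext_in; intros; ring.
    - apply rsum_swap. }
  rewrite E1, E2, boxsum_rsum, (boxsum_rsum I pi (S N)), <- rsum_minus,
    <- (rsum_minus (box (S N) I) pi), <- rsum_scal.
  eapply Rle_trans; [apply rsum_abs|]. apply rsum_le. intros z Hz. apply In_box in Hz.
  destruct Hz as [Hz _]. assert (Hr := stat_flow_le z N Hz).
  replace (h z * flow z - pi z * h z) with (h z * (flow z - pi z)) by ring.
  rewrite Rabs_mult, (Rabs_left1 (flow z - pi z)) by (unfold flow; lra).
  apply Rmult_le_compat; [apply Rabs_pos | unfold flow; lra | apply Hh; auto | lra].
Qed.

Lemma stat_invariant h H s : (forall z, valid I z -> Rabs (h z) <= H) ->
  Un_cv (Σ (fun z => pi z * h z)) s -> Un_cv (Σ (fun z => pi z * P h z)) s.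
Proof.
  intros Hh Hs.
  apply (cv_squeeze _ (fun N => Σ (fun z => pi z * h z) (S N)) (fun N => H * (Σ pi (S N) - Σ pi N))).
  - apply cv_shift1; auto.
  - replace 0 with (H * (1 - 1)) by ring. apply cv_scal, CV_minus; [apply cv_shift1|]; apply stat_cv_1.
  - intros N. apply stat_invariance_step; auto.
Qed.

Lemma stat_invariant_expect h H s t : (forall z, valid I z -> Rabs (h z) <= H) ->
  Un_cv (Σ (fun z => pi z * h z)) s -> Un_cv (Σ (fun z => pi z * E t h z)) s.
Proof.
  intros Hh Hs. induction t as [|t IH]; auto. simpl expect.
  apply (stat_invariant _ H); auto. intros; apply expect_abs_le; auto.
Qed.

(** Truncation to a box turns [Σ_N π f] into the [π]-integral of a bounded function. *)
Lemma stat_trunc_cv f N :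
  Un_cv (Σ (fun z => pi z * (if in_box N z then f z else 0))) (Σ (fun z => pi z * f z) N).
Proof.
  apply (cv_eventually_const _ _ N). intros M HM. rewrite <- (boxsum_trunc I _ N M HM).
  apply boxsum_ext. intros z _. destruct (in_box N z); ring.
Qed.

Lemma stat_outer_le g H M0 M : (M0 <= M)%nat -> (forall z, valid I z -> Rabs (g z) <= H) ->
  Σ (fun z => if in_box M0 z then 0 else pi z * g z) M <= H * (1 - Σ pi M0).
Proof.
  intros HM Hg.
  apply Rle_trans with (Σ (fun z => H * (if in_box M0 z then 0 else pi z)) M).
  - apply boxsum_le. intros z Hz. destruct (in_box M0 z); [lra|].
    specialize (Hg z Hz). apply Rabs_le_between in Hg. assert (H2 := stat_nonneg z Hz). nra.
  - assert (HH : 0 <= H) by (specialize (Hg θ (theta_valid I)); assert (H0 := Rabs_pos (g θ)); lra).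
    rewrite boxsum_scal. apply Rmult_le_compat_l; auto.
    assert (H1 := stat_boxsum_le_1 M). rewrite (boxsum_split I pi M0 M HM) in H1. lra.
Qed.

Lemma stat_Phi_le N : Σ (fun z => pi z * Φ z) N <= Phi_stat_bound.
Proof.
  set (hN := fun z => if in_box N z then Φ z else 0).
  set (HN := INR I * exp (a * INR N)).
  assert (HN0 : 0 <= HN) by (apply Rmult_le_pos; [apply pos_INR | apply Rlt_le, exp_pos]).
  assert (Hh : forall z, valid I z -> Rabs (hN z) <= HN).
  { intros z Hz. unfold hN. destruct (in_box N z) eqn:En; [|rewrite Rabs_R0; auto].
    rewrite Rabs_right by (apply Rle_ge, Phi_nonneg). apply Phi_in_box_le; auto. }
  apply Rle_plus_epsilon. intros e He.
  destruct (stat_tail_small (e / (2 * (HN + 1)))) as [M0 HM0]; [apply Rdiv_lt_0_compat; lra|].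
  assert (Htail : HN * (1 - Σ pi M0) <= e / 2).
  { apply Rle_trans with (HN * (e / (2 * (HN + 1)))); [apply Rmult_le_compat_l; lra|].
    apply (Rmult_le_reg_r (2 * (HN + 1))); [lra|]. field_simplify; nra. }
  set (C := Σ (fun z => pi z * Φ z) M0).
  assert (Hg := drift_rate_range).
  destruct (geom_small γ C (e / 2)) as [t Ht]; [lra | lra|].
  apply (cv_le_eventually _ _ _ M0 (stat_invariant_expect hN HN _ t Hh (stat_trunc_cv Φ N))).
  intros M HM. rewrite (boxsum_split I _ M0 M HM).
  assert (Hin : Σ (fun z => pi z * E t hN z) M0 <= γ ^ t * C + Phi_stat_bound).
  { apply Rle_trans with (Σ (fun z => γ ^ t * (pi z * Φ z) + Phi_stat_bound * pi z) M0).
    - apply boxsum_le. intros z Hz. replace (γ ^ t * (pi z * Φ z) + Phi_stat_bound * pi z)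
        with (pi z * (γ ^ t * Φ z + Phi_stat_bound)) by ring.
      apply Rmult_le_compat_l; [apply stat_nonneg; auto|].
      eapply Rle_trans; [|apply expect_Phi_le; auto]. apply expect_mono; auto.
      intros w Hw. unfold hN. destruct (in_box N w); [lra | apply Phi_nonneg].
    - rewrite boxsum_plus, !boxsum_scal. fold C. assert (H0 := Phi_stat_bound_pos).
      assert (H1 := stat_boxsum_le_1 M0). nra. }
  assert (Hout := stat_outer_le (fun z => E t hN z) HN M0 M HM
                    ltac:(intros; apply expect_abs_le; auto)).
  cbv beta in Hout. lra.
Qed.

Lemma stat_Phi_cv : exists l, Un_cv (Σ (fun z => pi z * Φ z)) l /\ l <= Phi_stat_bound.
Proof.
  apply boxsum_cv_bounded; [|apply stat_Phi_le].
  intros; apply Rmult_le_pos; [apply stat_nonneg; auto | apply Phi_nonneg].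
Qed.

Definition ergodic_const (c : R) : R := c * (2 / β + Phi_stat_bound + 1) + 1.

Lemma ergodic_const_pos c : 0 <= c -> 0 < ergodic_const c.
Proof.
  intros Hc. unfold ergodic_const. assert (Hb := lip_weight_range). assert (H := Phi_stat_bound_pos).
  assert (0 <= 2 / β) by (apply Rmult_le_pos; [lra | apply Rlt_le, Rinv_0_lt_compat; lra]).
  assert (0 <= c * (2 / β + Phi_stat_bound + 1)) by (apply Rmult_le_pos; lra). lra.
Qed.

Lemma ergodic_const_ge c x t : 0 <= c ->
  ρ ^ t * (c / β) * (2 + β * Φ x + β * Phi_stat_bound) <= ergodic_const c * (1 + Φ x) * ρ ^ t.
Proof.
  intros Hc. assert (Hβ := lip_weight_range). assert (Hρ := contraction_rate_range).
  assert (HB := Phi_stat_bound_pos). assert (HΦx := Phi_nonneg x). unfold ergodic_const.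
  replace (ρ ^ t * (c / β) * (2 + β * Φ x + β * Phi_stat_bound))
    with (ρ ^ t * (c * (2 / β + Phi_stat_bound) + c * Φ x)) by (field; lra).
  rewrite (Rmult_comm _ (ρ ^ t)). apply Rmult_le_compat_l; [apply pow_le; lra|].
  assert (0 <= 2 / β) by (apply Rmult_le_pos; [lra | apply Rlt_le, Rinv_0_lt_compat; lra]).
  assert (0 <= c * (2 / β + Phi_stat_bound)) by (apply Rmult_le_pos; lra).
  assert (0 <= c * Φ x) by nra. nra.
Qed.

Lemma stat_deviation_le h H L s x : valid I x ->
  (forall z, valid I z -> Rabs (h z) <= H) -> weighted_lip h L ->
  Un_cv (Σ (fun z => pi z * h z)) s -> Rabs (h x - s) <= L * (2 + β * Φ x + β * Phi_stat_bound).
Proof.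
  intros Hx Hh HL Hs.
  assert (HL0 := weighted_lip_nonneg h L HL). assert (Hβ := lip_weight_range).
  assert (Hu : Un_cv (fun M => h x * Σ pi M - Σ (fun z => pi z * h z) M) (h x * 1 - s))
    by (apply CV_minus; auto; apply cv_scal, stat_cv_1).
  rewrite <- (Rmult_1_r (h x)). apply (cv_abs_le_eventually _ _ _ 0 Hu). intros M _.
  rewrite <- boxsum_scal, <- boxsum_minus. eapply Rle_trans; [apply boxsum_abs|].
  apply Rle_trans with (Σ (fun z => L * ((2 + β * Φ x) * pi z + β * (pi z * Φ z))) M).
  - apply boxsum_le. intros z Hz. assert (Hpz := stat_nonneg z Hz).
    replace (h x * pi z - pi z * h z) with (pi z * (h x - h z)) by ring.
    rewrite Rabs_mult, Rabs_right by (apply Rle_ge; auto).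
    replace (L * ((2 + β * Φ x) * pi z + β * (pi z * Φ z))) with (pi z * (L * (2 + β * Φ x + β * Φ z)))
      by ring.
    apply Rmult_le_compat_l; auto.
  - rewrite boxsum_scal, boxsum_plus, !boxsum_scal. apply Rmult_le_compat_l; auto.
    assert (H1 := stat_boxsum_le_1 M). assert (H2 := stat_Phi_le M).
    assert (0 <= 2 + β * Φ x) by (assert (H3 := Phi_nonneg x); nra). nra.
Qed.

(** Functions dominated by [c Φ] can be truncated to the box reached by time [t]. *)
Lemma expect_boxsum_deviation_le c f x t N : 0 <= c ->
  (forall z, valid I z -> Rabs (f z) <= c * Φ z) -> valid I x -> (list_max x + t <= N)%nat ->
  Rabs (E t f x - Σ (fun z => pi z * f z) N)
  <= ρ ^ t * (c / β) * (2 + β * Φ x + β * Phi_stat_bound).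
Proof.
  intros Hc Hf Hx HN.
  set (fN := fun z => if in_box N z then f z else 0).
  assert (Eloc : E t f x = E t fN x).
  { apply expect_local; auto. intros z Hz Hb. unfold fN. rewrite (in_box_mono (list_max x + t) N z); auto. }
  set (H := c * (INR I * exp (a * INR N))).
  assert (HfN : forall z, valid I z -> Rabs (fN z) <= H).
  { intros z Hz. unfold fN, H. destruct (in_box N z) eqn:En.
    - eapply Rle_trans; [apply Hf; auto|]. apply Rmult_le_compat_l, Phi_in_box_le; auto.
    - rewrite Rabs_R0. apply Rmult_le_pos; auto.
      apply Rmult_le_pos; [apply pos_INR | apply Rlt_le, exp_pos]. }
  assert (HfN2 : forall z, valid I z -> Rabs (fN z) <= c * Φ z).
  { intros z Hz. unfold fN. destruct (in_box N z); [apply Hf; auto|].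
    rewrite Rabs_R0. apply Rmult_le_pos; auto; apply Phi_nonneg. }
  rewrite Eloc. apply (stat_deviation_le (E t fN) H); auto.
  - intros; apply expect_abs_le; auto.
  - apply expect_weighted_lip, weighted_lip_of_Phi_bound; auto.
  - apply (stat_invariant_expect fN H _ t HfN (stat_trunc_cv f N)).
Qed.

Lemma stat_ergodic c f : 0 <= c -> (forall z, valid I z -> Rabs (f z) <= c * Φ z) ->
  exists s, has_sum I (fun z => pi z * f z) s /\
    forall x, valid I x -> forall t, Rabs (E t f x - s) <= ergodic_const c * (1 + Φ x) * ρ ^ t.
Proof.
  intros Hc Hf. destruct stat_Phi_cv as [l [Hl HlB]].
  assert (Hdom : forall z, valid I z -> Rabs (pi z * f z) <= c * (pi z * Φ z)).
  { intros z Hz. rewrite Rabs_mult, Rabs_right by (apply Rle_ge, stat_nonneg; auto).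
    specialize (Hf z Hz). assert (H2 := stat_nonneg z Hz). nra. }
  destruct (boxsum_cv_dominated I (fun z => pi z * f z) (fun z => c * (pi z * Φ z)) (c * l) Hdom)
    as [s Hs].
  { apply (cv_eventually_ext (fun N => c * Σ (fun z => pi z * Φ z) N) _ _ 0); [|apply cv_scal; auto].
    intros; rewrite boxsum_scal; auto. }
  exists s. split.
  { split; auto. exists (c * Phi_stat_bound). intros n. eapply Rle_trans; [apply boxsum_le, Hdom|].
    rewrite boxsum_scal. apply Rmult_le_compat_l, stat_Phi_le; auto. }
  intros x Hx t. eapply Rle_trans; [|apply ergodic_const_ge; auto].
  apply Rle_plus_epsilon. intros e He.
  destruct (Hs e He) as [N1 HN1]. set (N := max N1 (list_max x + t)).
  specialize (HN1 N ltac:(unfold N; lia)). unfold Rdist in HN1.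
  assert (Hdev := expect_boxsum_deviation_le c f x t N Hc Hf Hx ltac:(unfold N; lia)).
  replace (E t f x - s) with ((E t f x - Σ (fun z => pi z * f z) N) + (Σ (fun z => pi z * f z) N - s))
    by ring.
  eapply Rle_trans; [apply Rabs_triang|]. lra.
Qed.

End Stationary.

Definition box_tail (N : nat) : R := exp (- a) ^ S N * (INR I + Phi_stat_bound).

Lemma box_tail_nonneg N : 0 <= box_tail N.
Proof.
  apply Rmult_le_pos; [apply pow_le, Rlt_le, exp_pos|].
  assert (H := Phi_stat_bound_pos). assert (H2 := pos_INR I). lra.
Qed.

Lemma box_tail_cv : Un_cv box_tail 0.
Proof.
  apply (cv_eventually_ext (fun N => exp (- a) ^ N * (exp (- a) * (INR I + Phi_stat_bound))) _ _ 0).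
  - intros; unfold box_tail; simpl; ring.
  - apply cv_geom. assert (H := exp_neg_a_range). lra.
Qed.

Lemma outside_box_expect_le t N :
  0 <= E t (fun z => if in_box N z then 0 else 1) θ <= box_tail N.
Proof.
  assert (Hθ := theta_valid I). split.
  - apply expect_nonneg; auto. intros z _; destruct (in_box N z); lra.
  - eapply Rle_trans; [apply (expect_mono t _ (fun z => exp (- a) ^ S N * Φ z)); auto|].
    { intros z Hz. destruct (in_box N z) eqn:En; [|apply Phi_out_of_box; auto].
      apply Rmult_le_pos; [apply pow_le, Rlt_le, exp_pos | apply Phi_nonneg]. }
    rewrite expect_scal. unfold box_tail. apply Rmult_le_compat_l; [apply pow_le, Rlt_le, exp_pos|].
    eapply Rle_trans; [apply expect_Phi_le; auto|]. rewrite Phi_theta.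
    assert (Hg := drift_rate_range). assert (0 <= INR I) by apply pos_INR.
    assert (γ ^ t <= 1) by (apply Rle_trans with (1 ^ t); [apply pow_incr; lra | rewrite pow1; lra]).
    assert (0 <= γ ^ t) by (apply pow_le; lra). nra.
Qed.

Lemma rsum_box_Pn_theta t N : rsum (box N I) (fun y => Pn I p q v t θ y) =
  1 - E t (fun z => if in_box N z then 0 else 1) θ.
Proof.
  unfold Pn. rewrite <- (expect_rsum t (box N I) (fun y z => indic y z)).
  rewrite <- (expect_const t 1 θ (theta_valid I)) at 1. rewrite <- expect_minus.
  apply expect_ext; [|apply theta_valid]. intros z Hz.
  rewrite (rsum_ext_in _ _ (fun y => 1 * indic y z)) by (intros; ring).
  rewrite rsum_box_indic by apply Hz. destruct (in_box N z); ring.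
Qed.

(** The laws [P^t(θ, .)] form a Cauchy sequence, by contraction of [y |-> P^t(., y)]. *)
Lemma Pn_theta_cauchy y : exists D, 0 <= D /\ forall s t,
  Rabs (Pn I p q v (s + t) θ y - Pn I p q v t θ y) <= D * ρ ^ t.
Proof.
  assert (Hβ := lip_weight_range). assert (Hρ := contraction_rate_range).
  assert (HB := Phi_stat_bound_pos). assert (HI0 : 0 <= INR I) by apply pos_INR.
  assert (Hθ := theta_valid I).
  exists ((1 / β) * (2 + 2 * β * INR I + β * Phi_stat_bound)). split.
  { apply Rmult_le_pos; [apply Rlt_le, Rdiv_lt_0_compat; lra | nra]. }
  intros s t. unfold Pn. rewrite expect_add. set (e := E t (indic y)).
  assert (Hlip := expect_weighted_lip t (indic y) (1 / β)
                    (weighted_lip_of_Phi_bound (indic y) 1 ltac:(lra) (fun z _ => indic_le_Phi y z))).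
  fold e in Hlip. set (Lt := ρ ^ t * (1 / β)) in Hlip.
  assert (HLt : 0 <= Lt)
    by (apply Rmult_le_pos; [apply pow_le; lra | apply Rlt_le, Rdiv_lt_0_compat; lra]).
  replace (E s e θ - e θ) with (E s (fun z => e z - e θ) θ) by (rewrite expect_minus, expect_const; auto).
  eapply Rle_trans; [apply expect_abs; auto|].
  eapply Rle_trans;
    [apply (expect_mono s _ (fun z => Lt * (2 + β * INR I) * 1 + (Lt * β) * Φ z)); auto|].
  { intros z Hz. rewrite Rabs_minus_sym. specialize (Hlip θ z Hθ Hz). rewrite Phi_theta in Hlip. lra. }
  rewrite expect_plus, expect_scal, expect_scal, expect_const by auto.
  assert (H := expect_Phi_le s θ Hθ). rewrite Phi_theta in H.
  assert (Hg := drift_rate_range).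
  assert (γ ^ s <= 1) by (apply Rle_trans with (1 ^ s); [apply pow_incr; lra | rewrite pow1; lra]).
  assert (γ ^ s * INR I <= INR I) by (assert (0 <= γ ^ s) by (apply pow_le; lra); nra).
  apply Rle_trans with (Lt * (2 + β * INR I) * 1 + Lt * β * (INR I + Phi_stat_bound)).
  - apply Rplus_le_compat_l. apply Rmult_le_compat_l; [nra | lra].
  - unfold Lt. right. field. lra.
Qed.

Lemma Pn_theta_cauchy_crit y : Cauchy_crit (fun t => Pn I p q v t θ y).
Proof.
  intros e He. assert (Hρ := contraction_rate_range). destruct (Pn_theta_cauchy y) as [D [HD HDs]].
  destruct (geom_small ρ D e ltac:(lra) He) as [N HN]. exists N. intros n m Hn Hm. unfold Rdist.
  assert (Hmono : forall k, (k >= N)%nat -> D * ρ ^ k < e)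
    by (intros k Hk; eapply Rle_lt_trans; [|apply HN]; rewrite Rmult_comm;
        apply Rmult_le_compat_r, pow_le_pow_le1; auto; lra).
  destruct (Nat.le_ge_cases n m).
  - replace m with ((m - n) + n)%nat by lia. rewrite Rabs_minus_sym.
    eapply Rle_lt_trans; [apply HDs | apply Hmono; lia].
  - replace n with ((n - m) + m)%nat by lia.
    eapply Rle_lt_trans; [apply HDs | apply Hmono; lia].
Qed.

Definition limit_dist (y : state) : R := proj1_sig (R_complete _ (Pn_theta_cauchy_crit y)).

Lemma limit_dist_cv y : Un_cv (fun t => Pn I p q v t θ y) (limit_dist y).
Proof. unfold limit_dist. destruct (R_complete _ (Pn_theta_cauchy_crit y)); auto. Qed.

Lemma limit_dist_nonneg y : 0 <= limit_dist y.
Proof. apply (cv_ge_eventually _ _ _ 0 (limit_dist_cv y)). intros; apply Pn_nonneg, theta_valid. Qed.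

Lemma limit_dist_boxsum_range N : 1 - box_tail N <= boxsum I limit_dist N <= 1.
Proof.
  assert (Hcv : Un_cv (fun t => rsum (box N I) (fun y => Pn I p q v t θ y)) (boxsum I limit_dist N))
    by (apply cv_rsum; intros; apply limit_dist_cv).
  split; [apply (cv_ge_eventually _ _ _ 0 Hcv) | apply (cv_le_eventually _ _ _ 0 Hcv)];
    intros t _; rewrite rsum_box_Pn_theta; assert (H := outside_box_expect_le t N); lra.
Qed.

Lemma limit_dist_cv_1 : Un_cv (boxsum I limit_dist) 1.
Proof.
  apply (cv_squeeze _ (fun _ => 1) box_tail); [apply cv_const | apply box_tail_cv|].
  intros N. assert (H := limit_dist_boxsum_range N). assert (H2 := box_tail_nonneg N).
  rewrite Rabs_left1 by lra. lra.
Qed.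

Lemma boxsum_Pn_theta_trans t N y : valid I y ->
  rsum (box N I) (fun x => Pn I p q v t θ x * T x y)
  = E t (fun z => if in_box N z then T z y else 0) θ.
Proof.
  intros Hy. unfold Pn.
  rewrite (rsum_ext_in _ _ (fun x => E t (fun z => T x y * indic x z) θ))
    by (intros; rewrite expect_scal; ring).
  rewrite <- (expect_rsum t (box N I) (fun x z => T x y * indic x z)).
  apply expect_ext; [|apply theta_valid]. intros z Hz.
  rewrite (rsum_box_indic N I (fun x => T x y)) by apply Hz. reflexivity.
Qed.

Lemma limit_dist_balance y : valid I y ->
  Un_cv (boxsum I (fun x => limit_dist x * T x y)) (limit_dist y).
Proof.
  intros Hy. assert (Hθ := theta_valid I).
  apply (cv_squeeze _ (fun _ => limit_dist y) box_tail); [apply cv_const | apply box_tail_cv|].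
  intros N.
  assert (Hcv : Un_cv (fun t => rsum (box N I) (fun x => Pn I p q v t θ x * T x y)
                                - Pn I p q v (S t) θ y)
                      (boxsum I (fun x => limit_dist x * T x y) N - limit_dist y)).
  { apply CV_minus; [|apply (cv_shift1 (fun t => Pn I p q v t θ y)), limit_dist_cv].
    apply cv_rsum. intros x _. rewrite Rmult_comm.
    apply (cv_eventually_ext (fun t => T x y * Pn I p q v t θ x) _ _ 0); [intros; ring|].
    apply cv_scal, limit_dist_cv. }
  apply (cv_abs_le_eventually _ _ _ 0 Hcv). intros t _.
  rewrite Pn_S, boxsum_Pn_theta_trans, <- expect_minus by auto.
  rewrite (expect_ext t _ (fun z => (-1) * (if in_box N z then 0 else T z y)))
    by (auto; intros; destruct (in_box N z); ring).
  rewrite expect_scal, Rabs_mult.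
  replace (Rabs (-1)) with 1 by (rewrite Rabs_left; lra). rewrite Rmult_1_l.
  assert (H1 : 0 <= E t (fun z => if in_box N z then 0 else T z y) θ)
    by (apply expect_nonneg; auto; intros z _; destruct (in_box N z); [lra | apply trans_nonneg]).
  assert (H2 : E t (fun z => if in_box N z then 0 else T z y) θ
               <= E t (fun z => if in_box N z then 0 else 1) θ)
    by (apply expect_mono; auto; intros z Hz; destruct (in_box N z); [lra | apply trans_le_1; auto]).
  assert (H3 := outside_box_expect_le t N). rewrite Rabs_right; lra.
Qed.

Lemma limit_dist_stationary : stationary I p q v limit_dist.
Proof.
  split; [intros; apply limit_dist_nonneg | split].
  - split; [|apply limit_dist_cv_1]. exists 1. intros n.
    rewrite (boxsum_ext I _ limit_dist) by (intros; apply Rabs_right, Rle_ge, limit_dist_nonneg).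
    apply limit_dist_boxsum_range.
  - intros y Hy. split; [|apply limit_dist_balance; auto]. exists 1. intros n.
    eapply Rle_trans; [|apply (proj2 (limit_dist_boxsum_range n))]. apply boxsum_le. intros z Hz.
    rewrite Rabs_mult, Rabs_right, Rabs_right
      by (apply Rle_ge; auto using limit_dist_nonneg, trans_nonneg).
    assert (H := trans_le_1 z y Hz Hy). assert (H2 := limit_dist_nonneg z). nra.
Qed.

Lemma stationary_unique pi y : stationary I p q v pi -> valid I y -> pi y = limit_dist y.
Proof.
  intros Hpi Hy.
  destruct (stat_ergodic pi Hpi 1 (indic y) ltac:(lra) (fun z _ => indic_le_Phi y z))
    as [s [[_ Hs] Hb]].
  assert (Es : s = pi y).
  { apply (UL_sequence _ _ _ Hs). apply (cv_eventually_const _ _ (list_max y)).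
    intros; apply boxsum_indic; auto. }
  subst s. apply (UL_sequence (fun t => Pn I p q v t θ y)); [|apply limit_dist_cv].
  apply (cv_squeeze _ (fun _ => pi y) (fun t => ρ ^ t * (ergodic_const 1 * (1 + Φ θ)))).
  - apply cv_const.
  - apply cv_geom. assert (H := contraction_rate_range). lra.
  - intros t. rewrite Rmult_comm. apply Hb, theta_valid.
Qed.

(** Testing against the sign pattern [sg] turns the total variation on a box into the
    deviation of a test function bounded by [Φ]. *)
Lemma limit_dist_tv_le x t N : valid I x ->
  boxsum I (fun y => Rabs (Pn I p q v t x y - limit_dist y)) N <= ergodic_const 1 * (1 + Φ x) * ρ ^ t.
Proof.
  intros Hx.
  set (sg := fun y => if Rle_dec 0 (Pn I p q v t x y - limit_dist y) then 1 else -1).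
  set (f := fun z => rsum (box N I) (fun y => sg y * indic y z)).
  assert (Hf : forall z, valid I z -> Rabs (f z) <= 1 * Φ z).
  { intros z Hz. unfold f. rewrite rsum_box_indic by apply Hz. assert (H := Phi_ge_1 z).
    destruct (in_box N z); [unfold sg; destruct (Rle_dec _ _)|]; rewrite ?Rabs_R1, ?Rabs_R0;
      [lra | rewrite Rabs_left; lra | lra]. }
  destruct (stat_ergodic limit_dist limit_dist_stationary 1 f ltac:(lra) Hf) as [s [[_ Hs] Hb]].
  assert (E1 : E t f x = rsum (box N I) (fun y => sg y * Pn I p q v t x y)).
  { unfold f. rewrite expect_rsum. apply rsum_ext_in. intros y _. rewrite expect_scal. reflexivity. }
  assert (E2 : s = rsum (box N I) (fun y => sg y * limit_dist y)).
  { apply (UL_sequence _ _ _ Hs). apply (cv_eventually_const _ _ N). intros M HM. unfold f.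
    rewrite boxsum_rsum.
    transitivity (rsum (box M I) (fun z => rsum (box N I) (fun y => sg y * (limit_dist z * indic y z)))).
    - apply rsum_ext_in; intros; rewrite <- rsum_scal; apply rsum_ext_in; intros; ring.
    - rewrite rsum_swap. apply rsum_ext_in. intros y Hy. apply In_box in Hy. rewrite rsum_scal.
      f_equal. apply boxsum_indic; [apply Hy|]. assert (H := list_max_le_in_box N y (proj2 Hy)). lia. }
  replace (boxsum I (fun y => Rabs (Pn I p q v t x y - limit_dist y)) N) with (E t f x - s).
  - eapply Rle_trans; [apply Rle_abs | apply Hb; auto].
  - rewrite E1, E2, boxsum_rsum, <- rsum_minus. apply rsum_ext_in. intros y _. unfold sg.
    destruct (Rle_dec 0 (Pn I p q v t x y - limit_dist y)); [rewrite Rabs_right | rewrite Rabs_left]; lra.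
Qed.

(** * Hitting time of theta *)

Definition hit_offset : R := 2 * b / α.
Definition hit_lyap (z : state) : R :=
  if list_eq_dec Nat.eq_dec z θ then 0 else Φ z + hit_offset.

Lemma hit_offset_ge_2 : 2 <= hit_offset.
Proof.
  unfold hit_offset. assert (H := drift_const_ge_1). assert (H2 := minor_const_range).
  apply (Rmult_le_reg_r α); [lra|]. unfold Rdiv. rewrite Rmult_assoc, Rinv_l by lra. nra.
Qed.

Lemma hit_lyap_range z : 0 <= hit_lyap z <= Φ z + hit_offset.
Proof.
  unfold hit_lyap. assert (H := Phi_nonneg z). assert (H2 := hit_offset_ge_2).
  destruct (list_eq_dec _ _ _); lra.
Qed.

Lemma hit_lyap_off_theta z : z <> θ -> hit_lyap z = Φ z + hit_offset.
Proof. intros Hz. unfold hit_lyap. destruct (list_eq_dec _ _ _); [contradiction | reflexivity]. Qed.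

Lemma hit_lyap_ge_1 z : z <> θ -> 1 <= hit_lyap z.
Proof.
  intros Hz. rewrite hit_lyap_off_theta by auto.
  assert (H := Phi_ge_1 z). assert (H2 := hit_offset_ge_2). lra.
Qed.

Definition hit_rate : R := ln (2 / (1 + ρ)).
Definition hit_moment_bound (x : state) : R := hit_lyap x * ((1 + ρ) / (1 - ρ)).

Lemma hit_rate_pos : 0 < hit_rate.
Proof.
  unfold hit_rate. rewrite <- ln_1. assert (H := contraction_rate_range). apply ln_increasing; [lra|].
  apply (Rmult_lt_reg_r (1 + ρ)); [lra|]. unfold Rdiv. rewrite Rmult_assoc, Rinv_l; lra.
Qed.

Lemma exp_hit_rate t : exp (hit_rate * INR t) = (2 / (1 + ρ)) ^ t.
Proof.
  rewrite Rmult_comm, <- exp_pow_INR. unfold hit_rate. rewrite exp_ln; auto.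
  assert (H := contraction_rate_range). apply Rmult_lt_0_compat; [lra | apply Rinv_0_lt_compat; lra].
Qed.

Definition taboo_const : R := 1 / (a * (1 - ρ)).

Lemma taboo_const_pos : 0 < taboo_const.
Proof.
  assert (H := contraction_rate_range). unfold taboo_const.
  apply Rdiv_lt_0_compat, Rmult_lt_0_compat; lra.
Qed.

Lemma hit_lyap_drift x : valid I x -> x <> θ -> P hit_lyap x <= ρ * hit_lyap x.
Proof.
  intros Hx Hne.
  assert (H1 : P hit_lyap x <= P (fun z => Φ z + hit_offset * ((fun _ => 1) z - indic θ z)) x).
  { apply Pf_mono. intros z Hz. unfold hit_lyap, indic. assert (H := Phi_nonneg z).
    destruct (list_eq_dec Nat.eq_dec z θ); lra. }
  rewrite Pf_plus, Pf_scal, Pf_minus, Pf_one, Pf_indic in H1 by (auto; apply theta_valid).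
  rewrite hit_lyap_off_theta by auto.
  assert (Hd := Pf_Phi_drift x Hx). assert (Hρ := contraction_rate_range).
  assert (Hβ := lip_weight_range). assert (Hγ := drift_rate_range). assert (Hα := minor_const_range).
  assert (HM := hit_offset_ge_2). assert (HT := trans_le_1 x θ Hx (theta_valid I)).
  assert (HT0 := trans_nonneg x θ).
  assert (HMα : hit_offset * α = 2 * b) by (unfold hit_offset; field; lra).
  assert (Hk : (1 - ρ) * hit_offset <= b) by nra.
  assert (HΦx := Phi_nonneg x).
  destruct (Rle_or_lt (Φ x) small_level) as [Hs|Hl].
  - assert (HTα := trans_theta_ge_minor x Hs).
    assert (hit_offset * (1 - T x θ) <= hit_offset * (1 - α)) by (apply Rmult_le_compat_l; lra).
    assert ((ρ - γ) * Φ x >= 0) by (apply Rle_ge, Rmult_le_pos; lra). nra.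
  - assert (hit_offset * (1 - T x θ) <= hit_offset) by nra.
    assert (HR := small_level_gap). assert (HR0 := small_level_pos).
    assert ((ρ - γ) * Φ x >= (1 - γ) / 2 * small_level)
      by (apply Rle_ge, Rmult_le_compat; lra). nra.
Qed.

(** [survival t x = P(τ_θ >= t | X_0 = x)]. *)
Fixpoint survival (t : nat) (x : state) : R :=
  match t with
  | O => 1
  | S t' => if list_eq_dec Nat.eq_dec x θ then 0 else P (survival t') x
  end.

Lemma hit_prob_survival t x : valid I x -> hit_prob I p q v t x = survival t x - survival (S t) x.
Proof.
  revert x. induction t as [|t IH]; intros x Hx; simpl.
  - destruct (list_eq_dec Nat.eq_dec x θ); [ring | rewrite Pf_one; auto; ring].
  - destruct (list_eq_dec Nat.eq_dec x θ); [ring|].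
    rewrite <- Pf_minus. apply Pf_ext. intros z Hz. apply IH; auto.
Qed.

Lemma survival_nonneg t x : valid I x -> 0 <= survival t x.
Proof.
  revert x. induction t as [|t IH]; intros x Hx; simpl; [lra|].
  destruct (list_eq_dec _ _ _); [lra | apply Pf_nonneg; auto].
Qed.

Lemma survival_S_le t z : valid I z -> survival (S t) z <= ρ ^ S t * hit_lyap z.
Proof.
  assert (Hρ := contraction_rate_range). assert (Hγ := drift_rate_range).
  revert z. induction t as [|t IH]; intros z Hz;
    (simpl survival; destruct (list_eq_dec Nat.eq_dec z θ) as [->|Hne];
     [unfold hit_lyap; destruct (list_eq_dec _ _ _); [lra | congruence]|]).
  - rewrite Pf_one by auto. rewrite hit_lyap_off_theta by auto.
    assert (H := Phi_ge_1 z). assert (H2 := hit_offset_ge_2). simpl. nra.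
  - eapply Rle_trans; [apply (Pf_mono _ (fun w => ρ ^ S t * hit_lyap w)); intros; apply IH; auto|].
    rewrite Pf_scal. assert (H := hit_lyap_drift z Hz Hne).
    assert (0 <= ρ ^ S t) by (apply pow_le; lra).
    replace (ρ ^ S (S t)) with (ρ ^ S t * ρ) by (simpl; ring). nra.
Qed.

Lemma survival_le t x : valid I x -> x <> θ -> survival t x <= ρ ^ t * hit_lyap x.
Proof.
  intros Hx Hne. destruct t as [|t]; [|apply survival_S_le; auto].
  simpl. assert (H := hit_lyap_ge_1 x Hne). lra.
Qed.

Lemma hit_prob_partial_sum x n : valid I x ->
  sum_f_R0 (fun t => hit_prob I p q v t x) n = 1 - survival (S n) x.
Proof.
  intros Hx. induction n as [|n IH].
  - change (hit_prob I p q v 0 x = 1 - survival 1 x). rewrite hit_prob_survival by auto. reflexivity.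
  - rewrite tech5, IH, hit_prob_survival by auto. ring.
Qed.

Lemma hit_prob_sum_1 x : valid I x -> x <> θ -> infinite_sum (fun t => hit_prob I p q v t x) 1.
Proof.
  intros Hx Hne e He. assert (Hρ := contraction_rate_range).
  destruct (geom_small ρ (ρ * hit_lyap x) e ltac:(lra) He) as [N HN].
  exists N. intros n Hn. unfold Rdist. rewrite hit_prob_partial_sum by auto.
  assert (H1 := survival_nonneg (S n) x Hx). assert (H2 := survival_le (S n) x Hx Hne).
  replace (1 - survival (S n) x - 1) with (- survival (S n) x) by ring.
  rewrite Rabs_Ropp, Rabs_right by lra.
  eapply Rle_lt_trans; [apply H2|]. eapply Rle_lt_trans; [|apply HN].
  assert (HU := hit_lyap_range x). assert (ρ ^ n <= ρ ^ N) by (apply pow_le_pow_le1; [lra | lia]).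
  simpl. assert (0 <= ρ * hit_lyap x) by (apply Rmult_le_pos; lra). nra.
Qed.

Lemma hit_prob_exp_moment_le x n : valid I x -> x <> θ ->
  sum_f_R0 (fun t => exp (hit_rate * INR t) * hit_prob I p q v t x) n <= hit_moment_bound x.
Proof.
  intros Hx Hne. assert (Hρ := contraction_rate_range). assert (HU := hit_lyap_range x).
  set (k := 2 * ρ / (1 + ρ)).
  assert (Hk : 0 <= k < 1)
    by (unfold k; split; [apply Rmult_le_pos; [lra | apply Rlt_le, Rinv_0_lt_compat; lra]|];
        apply (Rmult_lt_reg_r (1 + ρ)); [lra|]; unfold Rdiv; rewrite Rmult_assoc, Rinv_l; lra).
  apply Rle_trans with (sum_f_R0 (fun t => k ^ t * hit_lyap x) n).
  - apply sum_Rle. intros t _. rewrite exp_hit_rate, hit_prob_survival by auto.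
    assert (H1 := survival_nonneg (S t) x Hx). assert (H2 := survival_le t x Hx Hne).
    assert (H3 : 0 <= (2 / (1 + ρ)) ^ t)
      by (apply pow_le, Rmult_le_pos; [lra | apply Rlt_le, Rinv_0_lt_compat; lra]).
    apply Rle_trans with ((2 / (1 + ρ)) ^ t * (ρ ^ t * hit_lyap x)); [apply Rmult_le_compat_l; lra|].
    unfold k. replace (2 * ρ / (1 + ρ)) with (2 / (1 + ρ) * ρ) by (field; lra).
    rewrite Rpow_mult_distr. lra.
  - rewrite <- scal_sum, tech3 by lra. unfold hit_moment_bound.
    replace ((1 + ρ) / (1 - ρ)) with (1 / (1 - k)) by (unfold k; field; lra).
    apply Rmult_le_compat_l; [lra|]. unfold Rdiv.
    apply Rmult_le_compat_r; [apply Rlt_le, Rinv_0_lt_compat; lra|].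
    assert (0 <= k ^ S n) by (apply pow_le; lra). lra.
Qed.

(** Each step before [τ_θ] costs at most [total <= Φ / a <= (1 - ρ) taboo_const U],
    and [P U <= ρ U] there. *)
Lemma taboo_total_le n x : valid I x -> taboo_sum I p q v (total I) n x <= taboo_const * hit_lyap x.
Proof.
  assert (Hρ := contraction_rate_range). assert (Hk := taboo_const_pos).
  assert (Htot : forall z, z <> θ -> total I z <= taboo_const * (1 - ρ) * hit_lyap z).
  { intros z Hz. replace (taboo_const * (1 - ρ)) with (/ a) by (unfold taboo_const; field; lra).
    rewrite hit_lyap_off_theta by auto. assert (H := total_le_Phi z). assert (H2 := hit_offset_ge_2).
    unfold Rdiv in H. assert (0 < / a) by (apply Rinv_0_lt_compat; lra). nra. }
  revert x. induction n as [|n IH]; intros x Hx; simpl;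
    (destruct (list_eq_dec Nat.eq_dec x θ) as [->|Hne];
     [rewrite total_theta; unfold hit_lyap; destruct (list_eq_dec _ _ _); [lra | congruence]|]).
  - assert (H := Htot x Hne). assert (HU := hit_lyap_range x).
    assert (0 <= taboo_const * ρ * hit_lyap x) by (apply Rmult_le_pos; [nra | lra]). nra.
  - assert (H := Htot x Hne).
    eapply Rle_trans; [apply Rplus_le_compat_l, (Pf_mono _ (fun z => taboo_const * hit_lyap z)); auto|].
    rewrite Pf_scal. assert (H2 := hit_lyap_drift x Hx Hne). nra.
Qed.

Section StationaryBounds.
Variable pi : state -> R.
Hypothesis Hpi : stationary I p q v pi.

Lemma stat_total_le N : boxsum I (fun x => pi x * total I x) N <= Phi_stat_bound / a.
Proof.
  eapply Rle_trans; [apply (boxsum_le I _ (fun x => / a * (pi x * Φ x)))|].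
  - intros z Hz. assert (H := total_le_Phi z). assert (H2 := stat_nonneg pi Hpi z Hz).
    replace (/ a * (pi z * Φ z)) with (pi z * (Φ z / a)) by (unfold Rdiv; ring).
    apply Rmult_le_compat_l; auto.
  - rewrite boxsum_scal. unfold Rdiv. rewrite Rmult_comm.
    apply Rmult_le_compat_r; [apply Rlt_le, Rinv_0_lt_compat; lra | apply stat_Phi_le; auto].
Qed.

Lemma stat_tail_le N : 1 - boxsum I pi N <= box_tail N.
Proof.
  apply (cv_le_eventually (fun M => boxsum I pi M - boxsum I pi N) _ _ N);
    [apply CV_minus; [apply (stat_cv_1 pi Hpi) | apply cv_const]|].
  intros M HM. rewrite (boxsum_split I pi N M HM). ring_simplify.
  apply Rle_trans with (exp (- a) ^ S N * Phi_stat_bound).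
  - eapply Rle_trans; [apply (boxsum_le I _ (fun z => exp (- a) ^ S N * (pi z * Φ z)))|].
    + intros z Hz. assert (H := stat_nonneg pi Hpi z Hz). assert (HΦ := Phi_nonneg z).
      assert (0 <= exp (- a) ^ S N) by (apply pow_le, Rlt_le, exp_pos).
      destruct (in_box N z) eqn:En; [apply Rmult_le_pos, Rmult_le_pos; auto|].
      assert (H2 := Phi_out_of_box z N Hz En).
      replace (exp (- a) ^ S N * (pi z * Φ z)) with (pi z * (exp (- a) ^ S N * Φ z)) by ring.
      rewrite <- (Rmult_1_r (pi z)) at 1. apply Rmult_le_compat_l; auto.
    + rewrite boxsum_scal. apply Rmult_le_compat_l; [apply pow_le, Rlt_le, exp_pos | apply stat_Phi_le; auto].
  - unfold box_tail. apply Rmult_le_compat_l; [apply pow_le, Rlt_le, exp_pos|].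
    assert (0 <= INR I) by apply pos_INR. lra.
Qed.

Lemma stat_taboo_total_le n N :
  boxsum I (fun x => pi x * taboo_sum I p q v (total I) n x) N
  <= taboo_const * (Phi_stat_bound + hit_offset).
Proof.
  assert (Hk := taboo_const_pos). assert (HM := hit_offset_ge_2).
  eapply Rle_trans;
    [apply (boxsum_le I _ (fun x => taboo_const * (pi x * Φ x) + (taboo_const * hit_offset) * pi x))|].
  - intros z Hz. assert (H := taboo_total_le n z Hz). assert (H2 := stat_nonneg pi Hpi z Hz).
    assert (H3 := hit_lyap_range z).
    apply Rle_trans with (pi z * (taboo_const * hit_lyap z)); [apply Rmult_le_compat_l; auto|].
    assert (taboo_const * hit_lyap z <= taboo_const * (Φ z + hit_offset)) by (apply Rmult_le_compat_l; lra).
    nra.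
  - rewrite boxsum_plus, !boxsum_scal.
    assert (H1 := stat_Phi_le pi Hpi N). assert (H2 := stat_boxsum_le_1 pi Hpi N).
    assert (H3 := boxsum_nonneg I pi N (stat_nonneg pi Hpi)).
    assert (taboo_const * boxsum I (fun z => pi z * Φ z) N <= taboo_const * Phi_stat_bound)
      by (apply Rmult_le_compat_l; lra).
    assert (taboo_const * hit_offset * boxsum I pi N <= taboo_const * hit_offset)
      by (rewrite <- (Rmult_1_r (taboo_const * hit_offset)) at 2; apply Rmult_le_compat_l; nra).
    nra.
Qed.

End StationaryBounds.

End Policy.

Lemma chain_ergodic v :
  (forall x, valid I x -> reach I p q v x θ) /\
  aperiodic I p q v /\
  exists pi, stationary I p q v pi /\
    (forall pi', stationary I p q v pi' -> forall x, valid I x -> pi' x = pi x) /\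
    exists rho (M : state -> R), 0 < rho < 1 /\
      forall x, valid I x -> in_class I p q v x ->
      forall t N, boxsum I (fun y => Rabs (Pn I p q v t x y - pi y)) N <= M x * rho ^ t.
Proof.
  assert (Hone : forall x, Pn I p q v 1 x θ > 0)
    by (intros x; unfold Pn; simpl; rewrite Pf_indic by apply theta_valid; apply trans_theta_pos).
  split; [|split].
  - intros x _. exists 1%nat. apply Hone.
  - intros d _ H. apply Nat.divide_1_r, H, Hone. lia.
  - exists (limit_dist v). split; [apply limit_dist_stationary|split].
    + intros pi' Hpi' x Hx. apply stationary_unique; auto.
    + exists contraction_rate, (fun x => ergodic_const 1 * (1 + Φ x)).
      split; [apply contraction_rate_range|].
      intros x Hx _ t N. apply limit_dist_tv_le; auto.
Qed.

Lemma hitting_time_exp_moment : exists a1 : R, 0 < a1 /\ exists K : state -> R,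
  forall v, policy I v -> forall x, valid I x -> x <> θ ->
    infinite_sum (fun t => hit_prob I p q v t x) 1 /\
    forall n, sum_f_R0 (fun t => exp (a1 * INR t) * hit_prob I p q v t x) n <= K x.
Proof.
  exists hit_rate. split; [apply hit_rate_pos|]. exists hit_moment_bound.
  intros v _ x Hx Hne. split; [apply hit_prob_sum_1 | intros n; apply hit_prob_exp_moment_le]; auto.
Qed.

Lemma expect_geometric_convergence f : (exists c, forall x, valid I x -> Rabs (f x) <= c * Φ x) ->
  exists K eta, 0 < K /\ 0 < eta < 1 /\
    forall v, policy I v -> forall pi, stationary I p q v pi ->
      exists s, has_sum I (fun y => pi y * f y) s /\
        forall x, valid I x -> forall t, Rabs (expect I p q v t f x - s) <= K * (1 + Φ x) * eta ^ t.
Proof.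
  intros [c Hc]. set (c' := Rmax 0 c).
  assert (Hf : forall z, valid I z -> Rabs (f z) <= c' * Φ z)
    by (intros z Hz; eapply Rle_trans;
        [apply Hc; auto | apply Rmult_le_compat_r; [apply Phi_nonneg | apply Rmax_r]]).
  exists (ergodic_const c'), contraction_rate. split; [apply ergodic_const_pos, Rmax_l|].
  split; [apply contraction_rate_range|].
  intros v _ pi Hpi. apply stat_ergodic; auto. apply Rmax_l.
Qed.

Lemma stat_total_uniform_bound : exists C, forall v, policy I v -> forall pi, stationary I p q v pi ->
  forall N, boxsum I (fun x => pi x * total I x) N <= C.
Proof. exists (Phi_stat_bound / a). intros v _ pi Hpi N. apply (stat_total_le v pi Hpi). Qed.

Lemma stationary_uniformly_tight eps : 0 < eps -> exists N, forall v, policy I v -> forall pi,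
  stationary I p q v pi -> 1 - boxsum I pi N <= eps.
Proof.
  intros He. destruct (box_tail_cv eps He) as [N HN]. exists N. intros v _ pi Hpi.
  specialize (HN N (le_n _)). unfold Rdist in HN. rewrite Rminus_0_r in HN.
  apply Rabs_def2 in HN. eapply Rle_trans; [apply (stat_tail_le v pi Hpi) | lra].
Qed.

Lemma stat_taboo_total_uniform_bound : exists C, forall v, policy I v -> forall pi,
  stationary I p q v pi -> forall n N, boxsum I (fun x => pi x * taboo_sum I p q v (total I) n x) N <= C.
Proof.
  exists (taboo_const * (Phi_stat_bound + hit_offset)). intros v _ pi Hpi n N.
  apply stat_taboo_total_le; auto.
Qed.

End Model.

Theorem lemma2 (I : nat) (p a : R) (q : nat -> R)
  (HI : (1 <= I)%nat)
  (Hp : 0 < p < 1)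
  (Hq0 : q 0%nat < 1)
  (Hqdec : forall i, (S i < I)%nat -> q (S i) < q i)
  (HqI : 2 * p < q (I - 1)%nat)
  (Ha : 0 < a)
  (Hadrift : p * (exp a - 1) < q (I - 1)%nat / 2 * (1 - exp (- a))) :
  (forall v, policy I v ->
     (forall x, valid I x -> reach I p q v x (theta I)) /\
     aperiodic I p q v /\
     exists pi, stationary I p q v pi /\
       (forall pi', stationary I p q v pi' -> forall x, valid I x -> pi' x = pi x) /\
       exists rho (M : state -> R), 0 < rho < 1 /\
         forall x, valid I x -> in_class I p q v x ->
         forall t N, boxsum I (fun y => Rabs (Pn I p q v t x y - pi y)) N <= M x * rho ^ t)
  /\
  (exists a1 : R, 0 < a1 /\ exists K : state -> R,
     forall v, policy I v -> forall x, valid I x -> x <> theta I ->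
       infinite_sum (fun t => hit_prob I p q v t x) 1 /\
       forall n, sum_f_R0 (fun t => exp (a1 * INR t) * hit_prob I p q v t x) n <= K x)
  /\
  (forall f : state -> R,
     (exists c, forall x, valid I x -> Rabs (f x) <= c * Phi I a x) ->
     exists K eta, 0 < K /\ 0 < eta < 1 /\
       forall v, policy I v -> forall pi, stationary I p q v pi ->
         exists s, has_sum I (fun y => pi y * f y) s /\
           forall x, valid I x -> forall t,
             Rabs (expect I p q v t f x - s) <= K * (1 + Phi I a x) * eta ^ t)
  /\
  (exists C, forall v, policy I v -> forall pi, stationary I p q v pi ->
     forall N, boxsum I (fun x => pi x * total I x) N <= C)
  /\
  (forall eps, 0 < eps -> exists N, forall v, policy I v -> forall pi,
     stationary I p q v pi -> 1 - boxsum I pi N <= eps)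
  /\
  (exists C, forall v, policy I v -> forall pi, stationary I p q v pi ->
     forall n N, boxsum I (fun x => pi x * taboo_sum I p q v (total I) n x) N <= C).
Proof.
  split; [intros v _; eapply chain_ergodic; eauto|].
  split; [eapply hitting_time_exp_moment; eauto|].
  split; [intros f; eapply expect_geometric_convergence; eauto|].
  split; [eapply stat_total_uniform_bound; eauto|].
  split; [intros eps; eapply stationary_uniformly_tight; eauto|].
  eapply stat_taboo_total_uniform_bound; eauto.
Qed.
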